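(* Assume Conditions A and B, and assume at least one of the following: (a) $a>-\infty$ is a natural boundary and for some $z\in\mathcal E$, $\liminf_{y\to a}\frac{c_1(y,z)-g_0(y)}{\zeta(y)}=0$; (b) $b<\infty$ is a natural boundary and for some $y\in\mathcal E$, $\liminf_{z\to b}\frac{c_1(y,z)+g_0(z)}{\zeta(z)}=0$; (c) $a>-\infty$ is natural, $c_0(a)=0$ and $\liminf_{(y,z)\to(a,a),\,y<z}\frac{c_1(y,z)}{\zeta(z)-\zeta(y)}=0$; (d) $b<\infty$ is natural, $c_0(b)=0$ and $\liminf_{(y,z)\to(b,b),\,y<z}\frac{c_1(y,z)}{\zeta(z)-\zeta(y)}=0$. Then $F_0^*=0$ and no pair $(y,z)\in\mathcal R$ minimizes $F_0$.
   Context: Setting. $\mathcal I=(a,b)$, $-\infty\le a<b\le\infty$; $\mu,\sigma$ continuous on $\mathcal I$, $\sigma\neq0$; $X_0$ the regular diffusion $dX_0=\mu(X_0)dt+\sigma(X_0)dW$, $X_0(0)=x_0\in\mathcal I$. Scale density $s(x)=\exp(-\int^x2\mu/\sigma^2)$, scale function $S=\int s$, $S[y,z]=S(z)-S(y)$ ($dS$), speed density $m=1/(\sigma^2s)$, speed measure $M[y,z]=\int_y^z m$ ($dM$). Feller boundary classification; attainable means regular or exit. Condition A: $S(a,x]<\infty$, $S[x,b)=\infty$ for $x\in\mathcal I$ (so $a$ is regular/exit/natural, $b$ natural/entrance); if $a$ reflecting, $\lim_{x\to a}s(x)M[x,b)<\infty$; if $b$ natural, $M[y,b)<\infty$ for $y\in\mathcal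 I$; infinite boundaries are natural. $\mathcal E$ is $\mathcal I$ with $a$ added if attainable and $b$ added if entrance; $\mathcal R=\{(y,z)\in\mathcal E^2:y<z\}$, $\overline{\mathcal R}=\{(y,z)\in\mathcal E^2:y\le z\}$. Condition B: (a) $c_0:\mathcal E\to[0,\infty)$ continuous; at natural boundaries $c_0(a)=\lim_{x\to a}c_0(x)$, $c_0(b)=\lim_{x\to b}c_0(x)$ exist in $[0,\infty]$, with $c_0(\pm\infty)=\infty$ at infinite boundaries; $\int_y^bc_0\,dM<\infty$ for $y\in\mathcal I$; if $a$ reflecting, $\lim_{x\to a}s(x)\int_x^bc_0\,dM<\infty$. (b) $c_1:\overline{\mathcal R}\to[0,\infty]$ continuous, $c_1\ge k_1>0$, $c_1(\cdot,z)$ is $C^1$ near $a$ for $z\in\mathcal E\setminus\{a\}$, $c_1(y,\cdot)$ is $C^1$ near $b$ for $y\in\mathcal E\setminus\{b\}$. Functions: $g_0(x)=\int_{x_0}^x\int_u^b2c_0(v)\,dM(v)\,dS(u)$, $\zeta(x)=\int_{x_0}^x2M[u,b)\,dS(u)$ on $\mathcal I$, extended by continuity (possibly to $\pm\infty$). $F_0(y,z)=\frac{c_1(y,z)+g_0(z)-g_0(y)}{\zeta(z)-\zeta(y)}$ for $(y,z)\in\mathcal R$, $F_0(y,y)=\infty$, and $F_0^*=\inf_{\overline{\mathcal R}}F_0$. *)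

From Stdlib Require Import Reals Lra Classical ClassicalEpsilon.
Open Scope R_scope.

Inductive Rbar : Type := Fin (r : R) | PInf | MInf.

Definition Rbar_le (x y : Rbar) : Prop :=
  match x, y with
  | MInf, _ => True
  | Fin _, MInf => False
  | Fin a, Fin b => a <= b
  | Fin _, PInf => True
  | PInf, PInf => True
  | PInf, _ => False
  end.

Definition Rbar_lt (x y : Rbar) : Prop :=
  match x, y with
  | MInf, MInf => False
  | MInf, _ => True
  | Fin _, MInf => False
  | Fin a, Fin b => a < b
  | Fin _, PInf => True
  | PInf, _ => False
  end.

Definition is_finite (x : Rbar) : Prop := exists r : R, x = Fin r.

(* real part; only applied to values known to be finite *)
Definition Rbar_real (x : Rbar) : R :=
  match x with Fin r => r | _ => 0 end.

Definition Rbar_opp (x : Rbar) : Rbar :=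
  match x with Fin r => Fin (- r) | PInf => MInf | MInf => PInf end.

(* addition; the undefined form (+oo) + (-oo) is given the arbitrary value 0 *)
Definition Rbar_plus (x y : Rbar) : Rbar :=
  match x, y with
  | Fin a, Fin b => Fin (a + b)
  | PInf, MInf => Fin 0
  | MInf, PInf => Fin 0
  | PInf, _ => PInf
  | _, PInf => PInf
  | MInf, _ => MInf
  | _, MInf => MInf
  end.

Definition Rbar_minus (x y : Rbar) : Rbar := Rbar_plus x (Rbar_opp y).

Definition Rbar_scal_pos (r : R) (x : Rbar) : Rbar :=
  match x with Fin a => Fin (r * a) | PInf => PInf | MInf => MInf end.

(* division; undefined forms (oo/oo, x/0) get arbitrary values *)
Definition Rbar_div (x y : Rbar) : Rbar :=
  match y with
  | Fin d =>
      match x with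
      | Fin a => Fin (a / d)
      | PInf => if Rlt_dec 0 d then PInf else if Rlt_dec d 0 then MInf else Fin 0
      | MInf => if Rlt_dec 0 d then MInf else if Rlt_dec d 0 then PInf else Fin 0
      end
  | _ => Fin 0
  end.

Definition is_lub_Rbar (E : Rbar -> Prop) (l : Rbar) : Prop :=
  (forall x, E x -> Rbar_le x l) /\
  (forall u, (forall x, E x -> Rbar_le x u) -> Rbar_le l u).
Definition is_glb_Rbar (E : Rbar -> Prop) (l : Rbar) : Prop :=
  (forall x, E x -> Rbar_le l x) /\
  (forall u, (forall x, E x -> Rbar_le u x) -> Rbar_le u l).

Definition Rbar_sup (E : Rbar -> Prop) : Rbar := epsilon (inhabits PInf) (is_lub_Rbar E).
Definition Rbar_inf (E : Rbar -> Prop) : Rbar := epsilon (inhabits PInf) (is_glb_Rbar E).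

Definition Rnbhd (p : Rbar) (P : R -> Prop) : Prop :=
  match p with
  | Fin l => exists eps, 0 < eps /\ forall x, Rabs (x - l) < eps -> P x
  | PInf => exists M, forall x, M < x -> P x
  | MInf => exists M, forall x, x < M -> P x
  end.

Definition Rnbhd2 (y z : R) (P : R * R -> Prop) : Prop :=
  exists eps, 0 < eps /\
    forall u v, Rabs (u - y) < eps -> Rabs (v - z) < eps -> P (u, v).

Definition Rbar_nbhd (L : Rbar) (Q : Rbar -> Prop) : Prop :=
  match L with
  | Fin l => exists eps, 0 < eps /\ forall r, Rabs (r - l) < eps -> Q (Fin r)
  | PInf => exists M, forall x, Rbar_lt (Fin M) x -> Q x
  | MInf => exists M, forall x, Rbar_lt x (Fin M) -> Q x
  end.

Definition filterlim {T : Type} (F : (T -> Prop) -> Prop) (D : T -> Prop)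
  (f : T -> Rbar) (L : Rbar) : Prop :=
  forall Q, Rbar_nbhd L Q -> F (fun t => D t -> Q (f t)).

Definition Rbar_limval {T : Type} (F : (T -> Prop) -> Prop) (D : T -> Prop)
  (f : T -> Rbar) : Rbar :=
  epsilon (inhabits PInf) (fun L => filterlim F D f L).

Definition Rbar_liminf {T : Type} (F : (T -> Prop) -> Prop) (D : T -> Prop)
  (f : T -> Rbar) : Rbar :=
  Rbar_sup (fun v => exists P, F P /\
     v = Rbar_inf (fun w => exists t, P t /\ D t /\ w = f t)).

Definition C1_on (J : R -> Prop) (h : R -> R) : Prop :=
  exists h' : R -> R, forall y, J y ->
    (forall eps, 0 < eps -> exists del, 0 < del /\ forall t, J t -> t <> y ->
        Rabs (t - y) < del -> Rabs ((h t - h y) / (t - y) - h' y) < eps) /\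
    (forall eps, 0 < eps -> exists del, 0 < del /\ forall t, J t ->
        Rabs (t - y) < del -> Rabs (h' t - h' y) < eps).

(* Riemann integral \int_y^z f (oriented); arbitrary if f is not integrable *)
Definition Rint (f : R -> R) (y z : R) : R :=
  epsilon (inhabits 0) (fun r => exists pr : Riemann_integrable f y z, RiemannInt pr = r).

Definition inI (a b : Rbar) (x : R) : Prop := Rbar_lt a (Fin x) /\ Rbar_lt (Fin x) b.

Definition Int_to_b (b : Rbar) (f : R -> R) (y : R) : Rbar :=
  Rbar_limval (Rnbhd b) (fun z => y < z /\ Rbar_lt (Fin z) b) (fun z => Fin (Rint f y z)).

Definition Int_from_a (a : Rbar) (f : R -> R) (x : R) : Rbar :=
  Rbar_limval (Rnbhd a) (fun y => Rbar_lt a (Fin y) /\ y < x) (fun y => Fin (Rint f y x)).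

Section Diffusion.
Variables (a b : Rbar) (mu sigma : R -> R) (x0 : R).

Definition sdens (x : R) : R := exp (- Rint (fun u => 2 * mu u / (sigma u) ^ 2) x0 x).
Definition mdens (x : R) : R := / ((sigma x) ^ 2 * sdens x).
Definition Sfun (x : R) : R := Rint sdens x0 x.
Definition Mfun (x : R) : R := Rint mdens x0 x.

(* Feller's tests (reference point x0, all integrands nonnegative):
   Sigma(a) = \int_a^{x0} M[u,x0] dS(u),  N(a) = \int_a^{x0} S[u,x0] dM(u)  *)
Definition SigmaA : Rbar := Int_from_a a (fun u => (Mfun x0 - Mfun u) * sdens u) x0.
Definition NA : Rbar := Int_from_a a (fun u => (Sfun x0 - Sfun u) * mdens u) x0.
Definition SigmaB : Rbar := Int_to_b b (fun u => (Mfun u - Mfun x0) * sdens u) x0.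
Definition NB : Rbar := Int_to_b b (fun u => (Sfun u - Sfun x0) * mdens u) x0.

Definition regular_a : Prop := is_finite SigmaA /\ is_finite NA.
Definition exit_a : Prop := is_finite SigmaA /\ NA = PInf.
Definition entrance_a : Prop := SigmaA = PInf /\ is_finite NA.
Definition natural_a : Prop := SigmaA = PInf /\ NA = PInf.
Definition regular_b : Prop := is_finite SigmaB /\ is_finite NB.
Definition exit_b : Prop := is_finite SigmaB /\ NB = PInf.
Definition entrance_b : Prop := SigmaB = PInf /\ is_finite NB.
Definition natural_b : Prop := SigmaB = PInf /\ NB = PInf.

Definition attainable_a : Prop := regular_a \/ exit_a.

Definition inE (x : R) : Prop :=
  inI a b x \/ (Fin x = a /\ attainable_a) \/ (Fin x = b /\ entrance_b).

Definition extE (f : R -> R) (x : R) : Rbar :=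
  match excluded_middle_informative (inI a b x) with
  | left _ => Fin (f x)
  | right _ => Rbar_limval (Rnbhd (Fin x)) (inI a b) (fun y => Fin (f y))
  end.

Variable c0 : R -> R.
Variable c1 : R -> R -> Rbar.

(* g0(x) = \int_{x0}^x \int_u^b 2 c0(v) dM(v) dS(u) *)
Definition g0fun (x : R) : R :=
  Rint (fun u => Rbar_real (Int_to_b b (fun v => 2 * c0 v * mdens v) u) * sdens u) x0 x.
(* zeta(x) = \int_{x0}^x 2 M[u,b) dS(u) *)
Definition zetafun (x : R) : R :=
  Rint (fun u => 2 * Rbar_real (Int_to_b b mdens u) * sdens u) x0 x.

Definition g0E (x : R) : Rbar := extE g0fun x.
Definition zetaE (x : R) : Rbar := extE zetafun x.

Definition F0 (y z : R) : Rbar :=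
  if Rlt_dec y z then
    Rbar_div (Rbar_minus (Rbar_plus (c1 y z) (g0E z)) (g0E y))
             (Rbar_minus (zetaE z) (zetaE y))
  else PInf.

Definition F0star : Rbar :=
  Rbar_inf (fun v => exists y z, inE y /\ inE z /\ y <= z /\ v = F0 y z).

End Diffusion.

(* a_refl : the (regular) boundary a is specified to be reflecting *)
Definition Setting (a b : Rbar) (mu sigma : R -> R) (x0 : R) (a_refl : Prop) : Prop :=
  Rbar_lt a b /\ inI a b x0 /\
  (forall x, inI a b x -> continuity_pt mu x /\ continuity_pt sigma x /\ sigma x <> 0) /\
  (a_refl -> regular_a a mu sigma x0).

Definition ConditionA (a b : Rbar) (mu sigma : R -> R) (x0 : R) (a_refl : Prop) : Prop :=
  (forall x, inI a b x -> is_finite (Int_from_a a (sdens mu sigma x0) x)) /\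
  (forall x, inI a b x -> Int_to_b b (sdens mu sigma x0) x = PInf) /\
  (a_refl -> exists L : R,
      filterlim (Rnbhd a) (inI a b)
        (fun x => Rbar_scal_pos (sdens mu sigma x0 x) (Int_to_b b (mdens mu sigma x0) x))
        (Fin L)) /\
  (natural_b b mu sigma x0 -> forall y, inI a b y -> is_finite (Int_to_b b (mdens mu sigma x0) y)) /\
  (a = MInf -> natural_a a mu sigma x0) /\
  (b = PInf -> natural_b b mu sigma x0).

Definition ConditionB (a b : Rbar) (mu sigma : R -> R) (x0 : R) (a_refl : Prop)
  (c0 : R -> R) (c1 : R -> R -> Rbar) : Prop :=
  let E := inE a b mu sigma x0 in
  let m := mdens mu sigma x0 in
  (forall x, E x -> 0 <= c0 x) /\
  (forall x, E x -> filterlim (Rnbhd (Fin x)) E (fun y => Fin (c0 y)) (Fin (c0 x))) /\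
  (natural_a a mu sigma x0 -> exists L, filterlim (Rnbhd a) (inI a b) (fun y => Fin (c0 y)) L) /\
  (natural_b b mu sigma x0 -> exists L, filterlim (Rnbhd b) (inI a b) (fun y => Fin (c0 y)) L) /\
  (a = MInf -> filterlim (Rnbhd a) (inI a b) (fun y => Fin (c0 y)) PInf) /\
  (b = PInf -> filterlim (Rnbhd b) (inI a b) (fun y => Fin (c0 y)) PInf) /\
  (forall y, inI a b y -> is_finite (Int_to_b b (fun v => c0 v * m v) y)) /\
  (a_refl -> exists L : R,
      filterlim (Rnbhd a) (inI a b)
        (fun x => Rbar_scal_pos (sdens mu sigma x0 x) (Int_to_b b (fun v => c0 v * m v) x))
        (Fin L)) /\
  (forall y z, E y -> E z -> y <= z ->
      filterlim (Rnbhd2 y z) (fun p => E (fst p) /\ E (snd p) /\ fst p <= snd p)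
        (fun p => c1 (fst p) (snd p)) (c1 y z)) /\
  (exists k1, 0 < k1 /\ forall y z, E y -> E z -> y <= z -> Rbar_le (Fin k1) (c1 y z)) /\
  (forall z, E z -> Fin z <> a ->
      exists del h, 0 < del /\
        let J := fun y => E y /\ y <= z /\
                   match a with Fin al => y < al + del | MInf => y < - / del | PInf => False end in
        (forall y, J y -> c1 y z = Fin (h y)) /\ C1_on J h) /\
  (forall y, E y -> Fin y <> b ->
      exists del h, 0 < del /\
        let J := fun z => E z /\ y <= z /\
                   match b with Fin be => be - del < z | PInf => / del < z | MInf => False end in
        (forall z, J z -> c1 y z = Fin (h z)) /\ C1_on J h).

(* [F0] is positive on [R]: [c1 >= k1 > 0], [zeta] is strictly increasing and [g0]
   nondecreasing, and both stay finite at the attainable or entrance points of [E] thanks to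
   Feller's integrability conditions there.  Each of the hypotheses (a)-(d) yields pairs
   [(y, z)] with [F0 y z] arbitrarily small.  In (a) and (b), the liminf together with
   [c1 >= k1] forces [|zeta|] at the moving endpoint to be so large that the fixed endpoint
   becomes negligible; in (c) and (d), [c0 -> 0] at the natural boundary gives
   [g0' <= ep zeta'] near it, so the increments of [g0] are negligible against those of
   [zeta].  So the infimum is [0] and, [F0] being positive, it is not attained. *)

From Coquelicot Require Import Coquelicot.
From Stdlib Require Import Reals Lra Classical ClassicalEpsilon FunctionalExtensionality.
Open Scope R_scope.

(** * Extended reals, filters and limits *)

Lemma Rbar_le_refl x : Rbar_le x x.
Proof. destruct x; simpl; auto; lra. Qed.

Lemma Rbar_le_trans x y z : Rbar_le x y -> Rbar_le y z -> Rbar_le x z.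
Proof. destruct x, y, z; simpl; intros; auto; try lra; contradiction. Qed.

Lemma Rbar_le_antisym x y : Rbar_le x y -> Rbar_le y x -> x = y.
Proof. destruct x, y; simpl; intros; try contradiction; auto. f_equal; lra. Qed.

Lemma Rbar_lt_le x y : Rbar_lt x y -> Rbar_le x y.
Proof. destruct x, y; simpl; intros; auto; lra. Qed.

Lemma Rbar_not_lt_le x y : ~ Rbar_lt y x -> Rbar_le x y.
Proof. destruct x, y; simpl; intros; auto; lra. Qed.

Lemma Rbar_lt_le_trans x y z : Rbar_lt x y -> Rbar_le y z -> Rbar_lt x z.
Proof. destruct x, y, z; simpl; intros; auto; try lra; contradiction. Qed.

Lemma Rbar_opp_involutive x : Rbar_opp (Rbar_opp x) = x.
Proof. destruct x; simpl; auto. f_equal; ring. Qed.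

Lemma Rbar_opp_le x y : Rbar_le (Rbar_opp x) (Rbar_opp y) <-> Rbar_le y x.
Proof. destruct x, y; simpl; split; auto; lra. Qed.

Lemma ex_lub_Rbar (E : Rbar -> Prop) : exists l, is_lub_Rbar E l.
Proof.
  destruct (classic (E PInf)) as [HP|HP].
  { exists PInf; split; [intros [] _; simpl; auto|intros u Hu; apply Hu, HP]. }
  set (ER := fun r => E (Fin r)).
  destruct (classic (exists r, ER r)) as [[r0 Hr0]|Hne].
  2: { exists MInf; split; [|simpl; auto].
       intros [r| |] Hx; simpl; auto. apply Hne; exists r; exact Hx. }
  destruct (classic (bound ER)) as [Hb|Hb].
  - destruct (completeness ER Hb (ex_intro _ r0 Hr0)) as [l [Hl1 Hl2]].
    exists (Fin l); split.
    + intros [r| |] Hx; simpl; [exact (Hl1 r Hx)|exact (HP Hx)|exact I].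
    + intros [r| |] Hu; simpl; [|exact I|exact (Hu (Fin r0) Hr0)].
      apply Hl2; intros x Hx; exact (Hu (Fin x) Hx).
  - exists PInf; split; [intros [] _; simpl; auto|].
    intros [r| |] Hu; simpl; auto; [|exact (Hu (Fin r0) Hr0)].
    apply Hb; exists r; intros x Hx; exact (Hu (Fin x) Hx).
Qed.

Lemma ex_glb_Rbar (E : Rbar -> Prop) : exists l, is_glb_Rbar E l.
Proof.
  destruct (ex_lub_Rbar (fun x => E (Rbar_opp x))) as [l [H1 H2]].
  exists (Rbar_opp l); split.
  - intros x Hx. apply Rbar_opp_le. rewrite Rbar_opp_involutive.
    apply H1. rewrite Rbar_opp_involutive; exact Hx.
  - intros u Hu. apply Rbar_opp_le. rewrite Rbar_opp_involutive. apply H2.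
    intros x Hx. apply Rbar_opp_le. rewrite Rbar_opp_involutive. apply Hu, Hx.
Qed.

Lemma Rbar_sup_spec E : is_lub_Rbar E (Rbar_sup E).
Proof. unfold Rbar_sup. apply epsilon_spec, ex_lub_Rbar. Qed.

Lemma Rbar_inf_spec E : is_glb_Rbar E (Rbar_inf E).
Proof. unfold Rbar_inf. apply epsilon_spec, ex_glb_Rbar. Qed.

Lemma Rbar_inf_unique E l : is_glb_Rbar E l -> Rbar_inf E = l.
Proof.
  intros [H1 H2]. destruct (Rbar_inf_spec E) as [H3 H4].
  apply Rbar_le_antisym; [apply H2, H3|apply H4, H1].
Qed.

Definition Rbar_ball (L : Rbar) (e : R) : Rbar -> Prop :=
  match L with
  | Fin l => fun x => exists r, x = Fin r /\ Rabs (r - l) < e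
  | PInf => fun x => Rbar_lt (Fin (/ e)) x
  | MInf => fun x => Rbar_lt x (Fin (- / e))
  end.

Lemma Rbar_nbhd_ball L e : 0 < e -> Rbar_nbhd L (Rbar_ball L e).
Proof.
  intros He; destruct L; simpl.
  - exists e; split; auto. intros r0 Hr; exists r0; auto.
  - exists (/ e); auto.
  - exists (- / e); auto.
Qed.

Lemma Rbar_ball_separate L L' : L <> L' ->
  exists e, 0 < e /\ forall x, Rbar_ball L e x -> Rbar_ball L' e x -> False.
Proof.
  intros Hne.
  assert (Hfin : forall l, exists e, 0 < e /\
            forall r, Rabs (r - l) < e -> r < / e /\ - / e < r).
  { intro l. pose proof (Rabs_pos l). exists (/ (Rabs l + 2)). split.
    - apply Rinv_0_lt_compat; lra.
    - intros r Hr. rewrite Rinv_inv.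
      assert (/ (Rabs l + 2) <= 1).
      { rewrite <- Rinv_1. apply Rinv_le_contravar; lra. }
      assert (Rabs (r - l) < 1) by lra.
      revert H1; unfold Rabs; destruct (Rcase_abs (r - l)), (Rcase_abs l); intros; lra. }
  destruct L as [l| |], L' as [l'| |]; try contradiction.
  - assert (0 < Rabs (l - l')) by (apply Rabs_pos_lt; intro; apply Hne; f_equal; lra).
    exists (Rabs (l - l') / 2); split; [lra|].
    simpl. intros x [r [-> H1]] [r' [Hr' H2]]. injection Hr' as <-.
    pose proof (Rabs_triang (r - l') (l - r)) as Ht.
    replace (r - l' + (l - r)) with (l - l') in Ht by ring.
    rewrite <- Rabs_Ropp in H1. replace (- (r - l)) with (l - r) in H1 by ring. lra.
  - destruct (Hfin l) as [e [He H]]. exists e; split; auto.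
    intros x [r [-> H1]] H2. apply H in H1. simpl in H2. lra.
  - destruct (Hfin l) as [e [He H]]. exists e; split; auto.
    intros x [r [-> H1]] H2. apply H in H1. simpl in H2. lra.
  - destruct (Hfin l') as [e [He H]]. exists e; split; auto.
    intros x H2 [r [-> H1]]. apply H in H1. simpl in H2. lra.
  - exists 1; split; [lra|]. intros [] H1 H2; simpl in *; auto.
    rewrite Rinv_1 in *; lra.
  - destruct (Hfin l') as [e [He H]]. exists e; split; auto.
    intros x H2 [r [-> H1]]. apply H in H1. simpl in H2. lra.
  - exists 1; split; [lra|]. intros [] H1 H2; simpl in *; auto.
    rewrite Rinv_1 in *; lra.
Qed.

Definition upward_closed {T : Type} (F : (T -> Prop) -> Prop) : Prop :=
  forall P Q : T -> Prop, (forall t, P t -> Q t) -> F P -> F Q.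

Definition proper_filter_on {T : Type} (F : (T -> Prop) -> Prop) (D : T -> Prop) : Prop :=
  (forall P Q, F P -> F Q -> F (fun t => P t /\ Q t)) /\
  (forall P, F P -> exists t, D t /\ P t) /\
  upward_closed F.

Lemma Rbar_limval_unique {T : Type} (F : (T -> Prop) -> Prop) (D : T -> Prop) (f : T -> Rbar) L :
  proper_filter_on F D -> filterlim F D f L -> Rbar_limval F D f = L.
Proof.
  intros [Fand [Fmeet _]] HL. unfold Rbar_limval.
  set (L' := epsilon _ _).
  assert (HL' : filterlim F D f L') by (apply epsilon_spec; exists L; exact HL).
  apply NNPP; intro Hne.
  destruct (Rbar_ball_separate _ _ Hne) as [e [He Hsep]].
  pose proof (HL' _ (Rbar_nbhd_ball L' e He)) as H1.
  pose proof (HL _ (Rbar_nbhd_ball L e He)) as H2.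
  destruct (Fmeet _ (Fand _ _ H1 H2)) as [t [Dt [H3 H4]]].
  exact (Hsep _ (H3 Dt) (H4 Dt)).
Qed.

Section FilterlimReal.
Context {T : Type} (F : (T -> Prop) -> Prop) (D : T -> Prop).
Hypothesis F_upward : upward_closed F.

Lemma filterlim_Fin_intro (f : T -> R) l :
  (forall e, 0 < e -> F (fun t => D t -> Rabs (f t - l) < e)) ->
  filterlim F D (fun t => Fin (f t)) (Fin l).
Proof.
  intros H Q [e [He HQ]]. exact (F_upward _ _ (fun t Ht Dt => HQ _ (Ht Dt)) (H e He)).
Qed.

Lemma filterlim_Fin_elim (f : T -> R) l :
  filterlim F D (fun t => Fin (f t)) (Fin l) ->
  forall e, 0 < e -> F (fun t => D t -> Rabs (f t - l) < e).
Proof.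
  intros H e He. refine (F_upward _ _ _ (H _ (Rbar_nbhd_ball (Fin l) e He))).
  intros t Ht Dt. destruct (Ht Dt) as [r [Hr H']]. injection Hr as ->. exact H'.
Qed.

Lemma filterlim_PInf_intro (f : T -> R) :
  (forall M, F (fun t => D t -> M < f t)) -> filterlim F D (fun t => Fin (f t)) PInf.
Proof.
  intros H Q [M HQ]. refine (F_upward _ _ _ (H M)). intros t Ht Dt. apply HQ. exact (Ht Dt).
Qed.

Lemma filterlim_Fin_opp (g : T -> R) l :
  filterlim F D (fun t => Fin (- g t)) (Fin l) -> filterlim F D (fun t => Fin (g t)) (Fin (- l)).
Proof.
  intros H. apply filterlim_Fin_intro. intros e He.
  refine (F_upward _ _ _ (filterlim_Fin_elim (fun t => - g t) l H e He)).
  intros t Ht Dt. rewrite <- Rabs_Ropp. replace (- (g t - - l)) with (- g t - l) by ring. auto.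
Qed.

End FilterlimReal.

Lemma Rnbhd_and p P Q : Rnbhd p P -> Rnbhd p Q -> Rnbhd p (fun t => P t /\ Q t).
Proof.
  destruct p; simpl.
  - intros [e1 [He1 H1]] [e2 [He2 H2]]. exists (Rmin e1 e2); split; [apply Rmin_pos; auto|].
    pose proof (Rmin_l e1 e2); pose proof (Rmin_r e1 e2).
    intros x Hx; split; [apply H1|apply H2]; lra.
  - intros [M1 H1] [M2 H2]. exists (Rmax M1 M2).
    pose proof (Rmax_l M1 M2); pose proof (Rmax_r M1 M2).
    intros x Hx; split; [apply H1|apply H2]; lra.
  - intros [M1 H1] [M2 H2]. exists (Rmin M1 M2).
    pose proof (Rmin_l M1 M2); pose proof (Rmin_r M1 M2).
    intros x Hx; split; [apply H1|apply H2]; lra.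
Qed.

Lemma Rnbhd_upward p : upward_closed (Rnbhd p).
Proof.
  intros P Q H. destruct p; simpl.
  - intros [e [He H1]]; exists e; split; auto.
  - intros [M H1]; exists M; auto.
  - intros [M H1]; exists M; auto.
Qed.

Lemma Rnbhd_gt (b : Rbar) z : Rbar_lt (Fin z) b -> Rnbhd b (fun t => z < t).
Proof.
  destruct b as [be| |]; simpl; intros Hz; [|exists z; auto|contradiction].
  exists (be - z); split; [lra|]. intros x Hx.
  rewrite Rabs_minus_sym in Hx. unfold Rabs in Hx; destruct (Rcase_abs (be - x)); lra.
Qed.

Lemma Rnbhd_lt (a : Rbar) z : Rbar_lt a (Fin z) -> Rnbhd a (fun t => t < z).
Proof.
  destruct a as [al| |]; simpl; intros Hz; [|contradiction|exists z; auto].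
  exists (z - al); split; [lra|]. intros x Hx.
  unfold Rabs in Hx; destruct (Rcase_abs (x - al)); lra.
Qed.

Lemma Rnbhd_proper_at_b (b : Rbar) (c : R) (D : R -> Prop) :
  Rbar_lt (Fin c) b -> (forall z, c < z -> Rbar_lt (Fin z) b -> D z) -> proper_filter_on (Rnbhd b) D.
Proof.
  intros Hcb HD. split; [apply Rnbhd_and|split; [|apply Rnbhd_upward]].
  intros P HP. destruct b as [be| |]; simpl in *; [|clear Hcb|contradiction].
  - destruct HP as [e [He HP]].
    pose proof (Rmin_l e (be - c)); pose proof (Rmin_r e (be - c)).
    assert (0 < Rmin e (be - c)) by (apply Rmin_pos; lra).
    exists (be - Rmin e (be - c) / 2); split; [apply HD; simpl; lra|].
    apply HP. rewrite Rabs_left; lra.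
  - destruct HP as [M HP]. pose proof (Rmax_l c M); pose proof (Rmax_r c M).
    exists (Rmax c M + 1); split; [apply HD; simpl; auto; lra|apply HP; lra].
Qed.

Lemma Rnbhd_proper_at_a (a : Rbar) (c : R) (D : R -> Prop) :
  Rbar_lt a (Fin c) -> (forall z, Rbar_lt a (Fin z) -> z < c -> D z) -> proper_filter_on (Rnbhd a) D.
Proof.
  intros Hca HD. split; [apply Rnbhd_and|split; [|apply Rnbhd_upward]].
  intros P HP. destruct a as [al| |]; simpl in *; [|contradiction|clear Hca].
  - destruct HP as [e [He HP]].
    pose proof (Rmin_l e (c - al)); pose proof (Rmin_r e (c - al)).
    assert (0 < Rmin e (c - al)) by (apply Rmin_pos; lra).
    exists (al + Rmin e (c - al) / 2); split; [apply HD; simpl; lra|].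
    apply HP. rewrite Rabs_right; lra.
  - destruct HP as [M HP]. pose proof (Rmin_l c M); pose proof (Rmin_r c M).
    exists (Rmin c M - 1); split; [apply HD; simpl; auto; lra|apply HP; lra].
Qed.

Definition is_sup_on (P : R -> Prop) (g : R -> R) (L : R) : Prop :=
  (forall z, P z -> g z <= L) /\ (forall e, 0 < e -> exists z, P z /\ L - e < g z).

Lemma is_sup_on_unique P g L L' : is_sup_on P g L -> is_sup_on P g L' -> L = L'.
Proof.
  intros [H1 H2] [H3 H4].
  destruct (Rtotal_order L L') as [Hl|[Hl|Hl]]; auto.
  - destruct (H4 (L' - L)) as [z [Pz Hz]]; [lra|]. specialize (H1 z Pz). lra.
  - destruct (H2 (L - L')) as [z [Pz Hz]]; [lra|]. specialize (H3 z Pz). lra.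
Qed.

Lemma is_sup_on_le P g L B : is_sup_on P g L -> (forall z, P z -> g z <= B) -> L <= B.
Proof.
  intros [_ H2] H. apply Rnot_lt_le. intro Hlt. destruct (H2 (L - B)) as [z [Pz Hz]]; [lra|].
  specialize (H z Pz). lra.
Qed.

Lemma ex_is_sup_on P g K : (exists z, P z) -> (forall z, P z -> g z <= K) ->
  exists L, is_sup_on P g L.
Proof.
  intros [z0 Hz0] HK.
  set (E := fun r => exists z, P z /\ r = g z).
  assert (Hbd : bound E) by (exists K; intros r [z [Pz ->]]; auto).
  destruct (completeness E Hbd (ex_intro _ (g z0) (ex_intro _ z0 (conj Hz0 eq_refl))))
    as [L [HL1 HL2]].
  exists L; split; [intros z Pz; apply HL1; exists z; auto|].
  intros e He. apply NNPP; intro Hn. assert (L <= L - e); [|lra].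
  apply HL2. intros r [z [Pz ->]]. apply Rnot_lt_le; intro. apply Hn; exists z; auto.
Qed.

Lemma filterlim_nondecreasing_at_b (b : Rbar) (c : R) (D : R -> Prop) (g : R -> R) L :
  (forall z, D z -> Rbar_lt (Fin z) b) ->
  (forall z z', c < z -> z <= z' -> D z -> D z' -> g z <= g z') ->
  is_sup_on (fun z => c < z /\ D z) g L ->
  filterlim (Rnbhd b) D (fun z => Fin (g z)) (Fin L).
Proof.
  intros HDb Hmon [Hup Happ]. apply filterlim_Fin_intro; [apply Rnbhd_upward|]. intros e He.
  destruct (Happ e He) as [z1 [[Hz1 Dz1] Hg1]].
  apply (Rnbhd_upward b (fun t => z1 < t)); [|apply Rnbhd_gt, HDb, Dz1].
  intros t Ht Dt. assert (g z1 <= g t) by (apply Hmon; auto; lra).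
  assert (g t <= L) by (apply Hup; split; auto; lra).
  rewrite Rabs_left1; lra.
Qed.

Lemma filterlim_nondecreasing_unbounded_at_b (b : Rbar) (c : R) (D : R -> Prop) (g : R -> R) :
  (forall z, D z -> Rbar_lt (Fin z) b) ->
  (forall z z', c < z -> z <= z' -> D z -> D z' -> g z <= g z') ->
  (forall K, exists z, c < z /\ D z /\ K < g z) ->
  filterlim (Rnbhd b) D (fun z => Fin (g z)) PInf.
Proof.
  intros HDb Hmon HK. apply filterlim_PInf_intro; [apply Rnbhd_upward|]. intros M.
  destruct (HK M) as [z1 [Hz1 [Dz1 Hg1]]].
  apply (Rnbhd_upward b (fun t => z1 < t)); [|apply Rnbhd_gt, HDb, Dz1].
  intros t Ht Dt. assert (g z1 <= g t) by (apply Hmon; auto; lra). lra.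
Qed.

Lemma filterlim_nonincreasing_at_a (a : Rbar) (c : R) (D : R -> Prop) (g : R -> R) L :
  (forall z, D z -> Rbar_lt a (Fin z)) ->
  (forall z z', z <= z' -> z' < c -> D z -> D z' -> g z' <= g z) ->
  is_sup_on (fun z => z < c /\ D z) g L ->
  filterlim (Rnbhd a) D (fun z => Fin (g z)) (Fin L).
Proof.
  intros HDa Hmon [Hup Happ]. apply filterlim_Fin_intro; [apply Rnbhd_upward|]. intros e He.
  destruct (Happ e He) as [z1 [[Hz1 Dz1] Hg1]].
  apply (Rnbhd_upward a (fun t => t < z1)); [|apply Rnbhd_lt, HDa, Dz1].
  intros t Ht Dt. assert (g z1 <= g t) by (apply Hmon; auto; lra).
  assert (g t <= L) by (apply Hup; split; auto; lra).
  rewrite Rabs_left1; lra.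
Qed.

Lemma filterlim_nonincreasing_unbounded_at_a (a : Rbar) (c : R) (D : R -> Prop) (g : R -> R) :
  (forall z, D z -> Rbar_lt a (Fin z)) ->
  (forall z z', z <= z' -> z' < c -> D z -> D z' -> g z' <= g z) ->
  (forall K, exists z, z < c /\ D z /\ K < g z) ->
  filterlim (Rnbhd a) D (fun z => Fin (g z)) PInf.
Proof.
  intros HDa Hmon HK. apply filterlim_PInf_intro; [apply Rnbhd_upward|]. intros M.
  destruct (HK M) as [z1 [Hz1 [Dz1 Hg1]]].
  apply (Rnbhd_upward a (fun t => t < z1)); [|apply Rnbhd_lt, HDa, Dz1].
  intros t Ht Dt. assert (g z1 <= g t) by (apply Hmon; auto; lra). lra.
Qed.

Section Liminf.
Context {T : Type} (F : (T -> Prop) -> Prop) (D : T -> Prop) (f : T -> Rbar).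
Hypothesis liminf_0 : Rbar_liminf F D f = Fin 0.

Lemma liminf_eq_0_eventually_gt eta : 0 < eta ->
  exists P, F P /\ forall t, P t -> D t -> Rbar_lt (Fin (- eta)) (f t).
Proof.
  intros Heta. unfold Rbar_liminf in liminf_0.
  destruct (Rbar_sup_spec (fun v => exists P, F P /\
              v = Rbar_inf (fun w => exists t, P t /\ D t /\ w = f t))) as [H1 H2].
  rewrite liminf_0 in H1, H2.
  apply NNPP; intro Hn. assert (Rbar_le (Fin 0) (Fin (- eta))); [|simpl in *; lra].
  apply H2. intros x [P [HP ->]]. apply Rbar_not_lt_le; intro Hlt. apply Hn.
  exists P; split; auto. intros t Pt Dt.
  apply (Rbar_lt_le_trans _ _ _ Hlt). apply (Rbar_inf_spec _). exists t; auto.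
Qed.

Lemma liminf_eq_0_frequently_lt eta P : 0 < eta -> F P ->
  exists t, P t /\ D t /\ Rbar_lt (f t) (Fin eta).
Proof.
  intros Heta HP. unfold Rbar_liminf in liminf_0.
  destruct (Rbar_sup_spec (fun v => exists P, F P /\
              v = Rbar_inf (fun w => exists t, P t /\ D t /\ w = f t))) as [H1 _].
  rewrite liminf_0 in H1.
  set (W := fun w => exists t, P t /\ D t /\ w = f t).
  assert (Hv : Rbar_le (Rbar_inf W) (Fin 0)) by (apply H1; exists P; auto).
  apply NNPP; intro Hn.
  assert (Rbar_le (Fin eta) (Rbar_inf W)).
  { apply (Rbar_inf_spec W). intros x [t [Pt [Dt ->]]].
    apply Rbar_not_lt_le. intro Hlt. apply Hn. exists t; auto. }
  pose proof (Rbar_le_trans _ _ _ H Hv). simpl in *. lra.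
Qed.

End Liminf.

(** * Integrals over an open interval *)

Lemma continuity_pt_cst (c x : R) : continuity_pt (fun _ => c) x.
Proof. apply continuity_pt_const. intros ? ?; reflexivity. Qed.

Lemma continuity_pt_mult_fun f g x :
  continuity_pt f x -> continuity_pt g x -> continuity_pt (fun t => f t * g t) x.
Proof. exact (continuity_pt_mult f g x). Qed.

Lemma continuity_pt_plus_fun f g x :
  continuity_pt f x -> continuity_pt g x -> continuity_pt (fun t => f t + g t) x.
Proof. exact (continuity_pt_plus f g x). Qed.

Lemma continuity_pt_scal (c : R) f x : continuity_pt f x -> continuity_pt (fun t => c * f t) x.
Proof. apply continuity_pt_mult_fun, continuity_pt_cst. Qed.

Lemma is_derive_continuity_pt g x l : is_derive g x l -> continuity_pt g x.
Proof.
  intros H. apply continuity_pt_filterlim.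
  apply (@ex_derive_continuous R_AbsRing R_NormedModule). exists l; exact H.
Qed.

Section OpenInterval.
Variables (a b : Rbar).
Local Notation I := (inI a b).

Lemma inI_between x y t : I x -> I y -> x <= t <= y -> I t.
Proof.
  intros [H1 H2] [H3 H4] [H5 H6]. split.
  - destruct a; simpl in *; auto; lra.
  - destruct b; simpl in *; auto; lra.
Qed.

Lemma inI_segment x y t : I x -> I y -> Rmin x y <= t <= Rmax x y -> I t.
Proof.
  intros Hx Hy Ht. destruct (Rle_dec x y).
  - rewrite Rmin_left, Rmax_right in Ht by lra. apply (inI_between x y); auto.
  - rewrite Rmin_right, Rmax_left in Ht by lra. apply (inI_between y x); auto.
Qed.

Lemma inI_open x : I x -> exists d, 0 < d /\ forall t, Rabs (t - x) < d -> I t.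
Proof.
  intros [H1 H2].
  assert (Ha : exists d, 0 < d /\ forall t, Rabs (t - x) < d -> Rbar_lt a (Fin t)).
  { destruct a as [al| |]; simpl in *; [|contradiction|exists 1; split; auto; lra].
    exists (x - al); split; [lra|]. intros t Ht.
    unfold Rabs in Ht; destruct (Rcase_abs (t - x)); lra. }
  assert (Hb : exists d, 0 < d /\ forall t, Rabs (t - x) < d -> Rbar_lt (Fin t) b).
  { destruct b as [be| |]; simpl in *; [|exists 1; split; auto; lra|contradiction].
    exists (be - x); split; [lra|]. intros t Ht.
    unfold Rabs in Ht; destruct (Rcase_abs (t - x)); lra. }
  destruct Ha as [d1 [Hd1 Ha]], Hb as [d2 [Hd2 Hb]].
  exists (Rmin d1 d2); split; [apply Rmin_pos; auto|].
  pose proof (Rmin_l d1 d2); pose proof (Rmin_r d1 d2).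
  intros t Ht; split; [apply Ha|apply Hb]; lra.
Qed.

Lemma inI_locally x : I x -> locally x I.
Proof. intros Hx. destruct (inI_open x Hx) as [d [Hd H]]. exists (mkposreal d Hd). exact H. Qed.

Lemma inI_above w : I w -> exists z, w < z /\ I z.
Proof.
  intros Hw. destruct (inI_open w Hw) as [d [Hd H]].
  exists (w + d / 2); split; [lra|]. apply H. rewrite Rabs_right; lra.
Qed.

Lemma inI_below w : I w -> exists z, z < w /\ I z.
Proof.
  intros Hw. destruct (inI_open w Hw) as [d [Hd H]].
  exists (w - d / 2); split; [lra|]. apply H. rewrite Rabs_left; lra.
Qed.

Definition continuous_in (f : R -> R) : Prop := forall x, I x -> continuity_pt f x.

Lemma continuous_in_ext f g : (forall t, I t -> f t = g t) -> continuous_in g -> continuous_in f.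
Proof.
  intros He Hg x Hx. apply (continuity_pt_ext_loc g f x); [|apply Hg; auto].
  destruct (inI_locally x Hx) as [eps Heps]. exists eps. intros y Hy. symmetry. apply He, Heps, Hy.
Qed.

Section Integral.
Variable f : R -> R.
Hypothesis Hf : continuous_in f.

Lemma ex_RInt_in x y : I x -> I y -> ex_RInt f x y.
Proof.
  intros Hx Hy. apply (@ex_RInt_continuous R_CompleteNormedModule). intros z Hz.
  apply continuity_pt_filterlim, Hf, (inI_segment x y); auto.
Qed.

Lemma Rint_RInt x y : I x -> I y -> Rint f x y = RInt f x y.
Proof.
  intros Hx Hy. pose proof (ex_RInt_in x y Hx Hy) as He. unfold Rint.
  destruct (epsilon_spec (inhabits 0)
              (fun r => exists pr : Riemann_integrable f x y, RiemannInt pr = r))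
    as [pr <-]; [exists (RiemannInt (ex_RInt_Reals_0 f x y He)), (ex_RInt_Reals_0 f x y He); reflexivity|].
  symmetry. apply RInt_Reals.
Qed.

Lemma Rint_Chasles x y z : I x -> I y -> I z -> Rint f x y + Rint f y z = Rint f x z.
Proof.
  intros Hx Hy Hz. rewrite !Rint_RInt; auto.
  apply (@RInt_Chasles R_CompleteNormedModule f x y z); apply ex_RInt_in; auto.
Qed.

Lemma Rint_point x : I x -> Rint f x x = 0.
Proof. intros Hx. rewrite Rint_RInt; auto. apply (@RInt_point R_CompleteNormedModule). Qed.

Lemma Rint_swap x y : I x -> I y -> Rint f x y = - Rint f y x.
Proof.
  intros Hx Hy. pose proof (Rint_Chasles x y x Hx Hy Hx). rewrite Rint_point in H; auto. lra.
Qed.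

Lemma is_derive_Rint_upper c x : I c -> I x -> is_derive (fun t => Rint f c t) x (f x).
Proof.
  intros Hc Hx. destruct (inI_locally x Hx) as [eps Heps].
  apply (is_derive_ext_loc (fun t => RInt f c t)).
  - exists eps. intros y Hy. symmetry; apply Rint_RInt; auto.
  - apply (is_derive_RInt f (fun t => RInt f c t) c x).
    + exists eps. intros y Hy. apply (@RInt_correct R_CompleteNormedModule), ex_RInt_in; auto.
    + apply continuity_pt_filterlim, Hf, Hx.
Qed.

Lemma is_derive_Rint_lower c x : I c -> I x -> is_derive (fun t => Rint f t c) x (- f x).
Proof.
  intros Hc Hx. destruct (inI_locally x Hx) as [eps Heps].
  apply (is_derive_ext_loc (fun t => - Rint f c t)).
  - exists eps. intros y Hy. symmetry; apply Rint_swap; auto.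
  - apply (is_derive_opp (fun t => Rint f c t) x (f x)), is_derive_Rint_upper; auto.
Qed.

Lemma continuous_in_Rint_upper c : I c -> continuous_in (fun t => Rint f c t).
Proof. intros Hc x Hx. eapply is_derive_continuity_pt, is_derive_Rint_upper; eauto. Qed.

Lemma continuous_in_Rint_lower c : I c -> continuous_in (fun t => Rint f t c).
Proof. intros Hc x Hx. eapply is_derive_continuity_pt, is_derive_Rint_lower; eauto. Qed.

Lemma Rint_ge0 x y : I x -> I y -> x <= y -> (forall t, x < t < y -> 0 <= f t) -> 0 <= Rint f x y.
Proof. intros Hx Hy Hxy H. rewrite Rint_RInt; auto. apply RInt_ge_0; auto; apply ex_RInt_in; auto. Qed.

Lemma Rint_gt0 x y : I x -> I y -> x < y -> (forall t, x < t < y -> 0 < f t) -> 0 < Rint f x y.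
Proof.
  intros Hx Hy Hxy H. rewrite Rint_RInt; auto. apply RInt_gt_0; auto.
  intros t Ht. apply continuity_pt_filterlim, Hf, (inI_between x y); auto; lra.
Qed.

End Integral.

Lemma Rint_scal f (c : R) x y : continuous_in f -> I x -> I y -> Rint (fun t => c * f t) x y = c * Rint f x y.
Proof.
  intros Hf Hx Hy. rewrite !Rint_RInt; auto.
  - apply (@RInt_scal R_CompleteNormedModule), ex_RInt_in; auto.
  - intros z Hz. apply continuity_pt_scal, Hf, Hz.
Qed.

Lemma Rint_le f g x y : continuous_in f -> continuous_in g -> I x -> I y -> x <= y ->
  (forall t, x < t < y -> f t <= g t) -> Rint f x y <= Rint g x y.
Proof.
  intros Hf Hg Hx Hy Hxy H. rewrite !Rint_RInt; auto.
  apply RInt_le; auto; apply ex_RInt_in; auto.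
Qed.

Lemma Rint_ext_in f g x y : continuous_in g -> (forall t, I t -> f t = g t) -> I x -> I y ->
  Rint f x y = Rint g x y.
Proof.
  intros Hg He Hx Hy. assert (Hf : continuous_in f) by (apply (continuous_in_ext f g); auto).
  rewrite (Rint_RInt f), (Rint_RInt g); auto. apply RInt_ext.
  intros t Ht. apply He, (inI_segment x y); auto; lra.
Qed.

Lemma Rint_lin f g (c d : R) x y : continuous_in f -> continuous_in g -> I x -> I y ->
  Rint (fun t => c * f t + d * g t) x y = c * Rint f x y + d * Rint g x y.
Proof.
  intros Hf Hg Hx Hy. rewrite <- (Rint_scal f c), <- (Rint_scal g d); auto.
  rewrite !Rint_RInt; auto.
  - apply (@RInt_plus R_CompleteNormedModule); apply ex_RInt_in; auto;
      intros z Hz; apply continuity_pt_scal; auto.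
  - intros z Hz; apply continuity_pt_scal; auto.
  - intros z Hz; apply continuity_pt_scal; auto.
  - intros z Hz; apply continuity_pt_plus_fun; apply continuity_pt_scal; auto.
Qed.

Lemma Rint_le_upper f u x y : continuous_in f -> I u -> I x -> I y -> x <= y ->
  (forall t, x < t < y -> 0 <= f t) -> Rint f u x <= Rint f u y.
Proof.
  intros Hf Hu Hx Hy Hxy H. rewrite <- (Rint_Chasles f Hf u x y); auto.
  pose proof (Rint_ge0 f Hf x y Hx Hy Hxy H). lra.
Qed.

Lemma Rint_le_lower f u x y : continuous_in f -> I u -> I x -> I y -> u <= x ->
  (forall t, u < t < x -> 0 <= f t) -> Rint f x y <= Rint f u y.
Proof.
  intros Hf Hu Hx Hy Hux H. rewrite <- (Rint_Chasles f Hf u x y); auto.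
  pose proof (Rint_ge0 f Hf u x Hu Hx Hux H). lra.
Qed.

Section Tails.
Variables (f : R -> R) (u : R).
Hypotheses (Hf : continuous_in f) (Hu : I u).

Let D_b := fun z => u < z /\ Rbar_lt (Fin z) b.

Lemma D_b_inI z : D_b z -> I z.
Proof. intros [H1 H2]. split; auto. destruct Hu as [H _]. destruct a; simpl in *; auto; lra. Qed.

Lemma Rnbhd_b_proper : proper_filter_on (Rnbhd b) D_b.
Proof. apply (Rnbhd_proper_at_b b u); [apply Hu|intros z H1 H2; split; auto]. Qed.

Section NonnegRight.
Hypothesis f_ge0 : forall t, u < t -> I t -> 0 <= f t.

Lemma Rint_nondecreasing_upper z z' : u < z -> z <= z' -> D_b z -> D_b z' -> Rint f u z <= Rint f u z'.
Proof.
  intros H1 H2 Dz Dz'. apply Rint_le_upper; auto using D_b_inI.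
  intros t Ht. apply f_ge0; [lra|]. apply (inI_between z z'); auto using D_b_inI; lra.
Qed.

Lemma Int_to_b_bounded K : (forall z, u < z -> I z -> Rint f u z <= K) ->
  exists L, Int_to_b b f u = Fin L /\ is_sup_on (fun z => u < z /\ I z) (Rint f u) L.
Proof.
  intros HK. destruct (ex_is_sup_on (fun z => u < z /\ I z) (Rint f u) K) as [L HL].
  - destruct (inI_above u Hu) as [z Hz]. exists z; exact Hz.
  - intros z [H1 H2]; auto.
  - exists L; split; auto. unfold Int_to_b. apply Rbar_limval_unique; [apply Rnbhd_b_proper|].
    apply (filterlim_nondecreasing_at_b b u D_b (Rint f u)).
    + intros z [_ H]; exact H.
    + exact Rint_nondecreasing_upper.
    + destruct HL as [HL1 HL2]. split.
      * intros z [H1 H2]. apply HL1. split; auto. apply D_b_inI, H2.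
      * intros e He. destruct (HL2 e He) as [z [[H1 H2] H3]].
        exists z; split; auto. split; auto. split; auto. apply H2.
Qed.

Lemma Int_to_b_unbounded : (forall K, exists z, u < z /\ I z /\ K < Rint f u z) ->
  Int_to_b b f u = PInf.
Proof.
  intros HK. unfold Int_to_b. apply Rbar_limval_unique; [apply Rnbhd_b_proper|].
  apply (filterlim_nondecreasing_unbounded_at_b b u D_b (Rint f u)).
  - intros z [_ H]; exact H.
  - exact Rint_nondecreasing_upper.
  - intros K. destruct (HK K) as [z [H1 [H2 H3]]]. exists z; split; auto. split; auto.
    split; auto. apply H2.
Qed.

Lemma Int_to_b_cases :
  (exists L, Int_to_b b f u = Fin L /\ is_sup_on (fun z => u < z /\ I z) (Rint f u) L) \/
  (Int_to_b b f u = PInf /\ forall K, exists z, u < z /\ I z /\ K < Rint f u z).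
Proof.
  destruct (classic (exists K, forall z, u < z -> I z -> Rint f u z <= K)) as [[K HK]|HK].
  - left. apply (Int_to_b_bounded K HK).
  - right. assert (HK' : forall K, exists z, u < z /\ I z /\ K < Rint f u z).
    { intros K. apply NNPP; intro Hn. apply HK. exists K. intros z H1 H2.
      apply Rnot_lt_le; intro H3; apply Hn; exists z; auto. }
    split; auto. apply Int_to_b_unbounded, HK'.
Qed.

Lemma Int_to_b_is_sup L : Int_to_b b f u = Fin L -> is_sup_on (fun z => u < z /\ I z) (Rint f u) L.
Proof.
  intros HL. destruct Int_to_b_cases as [[L' [H1 H2]]|[H1 _]];
    rewrite HL in H1; [injection H1 as ->; auto|discriminate].
Qed.

Lemma Int_to_b_ge_Rint L z : Int_to_b b f u = Fin L -> u < z -> I z -> Rint f u z <= L.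
Proof. intros HL Hz HzI. apply (Int_to_b_is_sup L HL); split; auto. Qed.

End NonnegRight.

Let D_a := fun y => Rbar_lt a (Fin y) /\ y < u.

Lemma D_a_inI y : D_a y -> I y.
Proof. intros [H1 H2]. split; auto. destruct Hu as [_ H]. destruct b; simpl in *; auto; lra. Qed.

Section NonnegLeft.
Hypothesis f_ge0 : forall t, t < u -> I t -> 0 <= f t.

Lemma Rint_nonincreasing_lower y y' : y <= y' -> y' < u -> D_a y -> D_a y' -> Rint f y' u <= Rint f y u.
Proof.
  intros H1 H2 Dy Dy'. apply Rint_le_lower; auto using D_a_inI.
  intros t Ht. apply f_ge0; [lra|]. apply (inI_between y y'); auto using D_a_inI; lra.
Qed.

Lemma Int_from_a_cases :
  (exists L, Int_from_a a f u = Fin L /\ is_sup_on (fun y => y < u /\ I y) (fun y => Rint f y u) L) \/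
  (Int_from_a a f u = PInf /\ forall K, exists y, y < u /\ I y /\ K < Rint f y u).
Proof.
  assert (Hprop : proper_filter_on (Rnbhd a) D_a).
  { apply (Rnbhd_proper_at_a a u); [apply Hu|intros z H1 H2; split; auto]. }
  destruct (classic (exists K, forall y, y < u -> I y -> Rint f y u <= K)) as [[K HK]|HK].
  - left. destruct (ex_is_sup_on (fun y => y < u /\ I y) (fun y => Rint f y u) K) as [L HL].
    + destruct (inI_below u Hu) as [z Hz]. exists z; exact Hz.
    + intros z [H1 H2]; auto.
    + exists L; split; auto. unfold Int_from_a. apply Rbar_limval_unique; auto.
      apply (filterlim_nonincreasing_at_a a u D_a (fun y => Rint f y u)).
      * intros z [H _]; exact H.
      * exact Rint_nonincreasing_lower.
      * destruct HL as [HL1 HL2]. split.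
        -- intros z [H1 H2]. apply HL1. split; auto. apply D_a_inI, H2.
        -- intros e He. destruct (HL2 e He) as [z [[H1 H2] H3]].
           exists z; split; auto. split; auto. split; auto. apply H2.
  - right. assert (HK' : forall K, exists y, y < u /\ I y /\ K < Rint f y u).
    { intros K. apply NNPP; intro Hn. apply HK. exists K. intros z H1 H2.
      apply Rnot_lt_le; intro H3; apply Hn; exists z; auto. }
    split; auto. unfold Int_from_a. apply Rbar_limval_unique; auto.
    apply (filterlim_nonincreasing_unbounded_at_a a u D_a (fun y => Rint f y u)).
    + intros z [H _]; exact H.
    + exact Rint_nonincreasing_lower.
    + intros K. destruct (HK' K) as [z [H1 [H2 H3]]]. exists z; split; auto. split; auto.
      split; auto. apply H2.
Qed.

End NonnegLeft.
End Tails.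

Lemma Int_to_b_shift f x0 u L0 : continuous_in f -> I x0 -> I u -> (forall t, I t -> 0 <= f t) ->
  Int_to_b b f x0 = Fin L0 -> Int_to_b b f u = Fin (L0 + Rint f u x0).
Proof.
  intros Hf Hx0 Hu Hpos H0.
  destruct (Int_to_b_is_sup f x0 Hf Hx0 (fun t _ => Hpos t) L0 H0) as [S1 S2].
  assert (Hsup : is_sup_on (fun z => u < z /\ I z) (Rint f u) (L0 + Rint f u x0)).
  { split.
    - intros z [Hz1 Hz2]. rewrite <- (Rint_Chasles f Hf u x0 z); auto.
      destruct (Rlt_le_dec x0 z) as [Hlt|Hle].
      + specialize (S1 z (conj Hlt Hz2)). lra.
      + assert (Rint f x0 z <= Rint f x0 x0).
        { apply Rint_le_upper; auto. intros t Ht. apply Hpos, (inI_between z x0); auto; lra. }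
        assert (0 <= L0).
        { destruct (inI_above x0 Hx0) as [w [Hw1 Hw2]]. specialize (S1 w (conj Hw1 Hw2)).
          pose proof (Rint_ge0 f Hf x0 w Hx0 Hw2 ltac:(lra)
                        (fun t Ht => Hpos t (inI_between x0 w t Hx0 Hw2 ltac:(lra)))). lra. }
        rewrite Rint_point in H; auto. lra.
    - intros e He. destruct (S2 e He) as [z1 [[Hz1 Hz1'] Hz1e]].
      destruct (inI_above (Rmax u z1)) as [z [Hz Hz']].
      { destruct (Rle_dec u z1); [rewrite Rmax_right|rewrite Rmax_left]; auto; lra. }
      pose proof (Rmax_l u z1); pose proof (Rmax_r u z1).
      exists z; split; [split; auto; lra|].
      rewrite <- (Rint_Chasles f Hf u x0 z); auto.
      assert (Rint f x0 z1 <= Rint f x0 z).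
      { apply Rint_le_upper; auto; try lra. intros t Ht. apply Hpos, (inI_between z1 z); auto; lra. }
      lra. }
  destruct (Int_to_b_cases f u Hf Hu (fun t _ => Hpos t)) as [[L [H1 H2]]|[H1 H2]].
  - rewrite H1. f_equal. apply (is_sup_on_unique _ _ _ _ H2 Hsup).
  - destruct Hsup as [Hs _]. destruct (H2 (L0 + Rint f u x0)) as [z [Hz1 [Hz2 Hz3]]].
    specialize (Hs z (conj Hz1 Hz2)). lra.
Qed.

Lemma Int_to_b_Fin_pos f u L : continuous_in f -> (forall t, I t -> 0 < f t) -> I u ->
  Int_to_b b f u = Fin L -> 0 < L.
Proof.
  intros Hf Hp Hu HL. destruct (inI_above u Hu) as [z [Hz1 Hz2]].
  pose proof (Int_to_b_ge_Rint f u Hf Hu (fun t _ Ht => Rlt_le _ _ (Hp t Ht)) L z HL Hz1 Hz2).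
  assert (0 < Rint f u z); [|lra].
  apply Rint_gt0; auto. intros t Ht. apply Hp, (inI_between u z); auto; lra.
Qed.

Lemma Int_to_b_Fin_nonneg f u L : continuous_in f -> (forall t, I t -> 0 <= f t) -> I u ->
  Int_to_b b f u = Fin L -> 0 <= L.
Proof.
  intros Hf Hp Hu HL. destruct (inI_above u Hu) as [z [Hz1 Hz2]].
  pose proof (Int_to_b_ge_Rint f u Hf Hu (fun t _ Ht => Hp t Ht) L z HL Hz1 Hz2).
  assert (0 <= Rint f u z); [|lra].
  apply Rint_ge0; auto; try lra. intros t Ht. apply Hp, (inI_between u z); auto; lra.
Qed.

Lemma Rint_unbounded_compare f g x0 x1 c : continuous_in f -> continuous_in g ->
  I x0 -> I x1 -> x0 <= x1 -> 0 < c ->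
  (forall t, x0 < t -> I t -> 0 <= f t) -> (forall t, x0 < t -> I t -> 0 <= g t) ->
  (forall t, x1 < t -> I t -> c * g t <= f t) ->
  (forall K, exists z, x0 < z /\ I z /\ K < Rint g x0 z) ->
  (forall K, exists z, x0 < z /\ I z /\ K < Rint f x0 z).
Proof.
  intros Hf Hg Hx0 Hx1 H01 Hc Hfp Hgp Hfg Hu K.
  destruct (Hu (Rabs K / c + Rint g x0 x1)) as [z [Hz1 [Hz2 Hz3]]].
  assert (HK : 0 <= Rabs K / c) by (apply Rdiv_le_0_compat; [apply Rabs_pos|exact Hc]).
  assert (Hzx1 : x1 < z).
  { apply Rnot_le_lt; intro Hle.
    assert (Rint g x0 z <= Rint g x0 x1).
    { apply Rint_le_upper; auto. intros t Ht. apply Hgp; [lra|]. apply (inI_between z x1); auto; lra. }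
    lra. }
  exists z; split; auto; split; auto.
  rewrite <- (Rint_Chasles f Hf x0 x1 z); auto.
  rewrite <- (Rint_Chasles g Hg x0 x1 z) in Hz3; auto.
  assert (H1 : 0 <= Rint f x0 x1).
  { apply Rint_ge0; auto. intros t Ht. apply Hfp; [lra|]. apply (inI_between x0 x1); auto; lra. }
  assert (H2 : c * Rint g x1 z <= Rint f x1 z).
  { rewrite <- (Rint_scal g c); auto. apply Rint_le; auto; try lra.
    - intros t Ht. apply continuity_pt_scal, Hg, Ht.
    - intros t Ht. apply Hfg; [lra|]. apply (inI_between x1 z); auto; lra. }
  assert (H3 : Rabs K < c * Rint g x1 z).
  { assert (Rabs K / c < Rint g x1 z) by lra.
    apply (Rmult_lt_compat_l c) in H; auto.
    replace (c * (Rabs K / c)) with (Rabs K) in H by (field; lra). exact H. }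
  pose proof (Rle_abs K). lra.
Qed.

End OpenInterval.

Lemma extE_in a b f x : inI a b x -> extE a b f x = Fin (f x).
Proof.
  intros Hx. unfold extE. destruct (excluded_middle_informative (inI a b x)); [reflexivity|contradiction].
Qed.

Lemma extE_out a b f x : ~ inI a b x ->
  extE a b f x = Rbar_limval (Rnbhd (Fin x)) (inI a b) (fun y => Fin (f y)).
Proof.
  intros Hx. unfold extE. destruct (excluded_middle_informative (inI a b x)); [contradiction|reflexivity].
Qed.

Lemma quotient_lt_of_left_ratio c Gy Zy Gz Zz k1 eps eta :
  0 < eps -> 0 < k1 -> k1 <= c -> Gy <= 0 -> Zy < 0 -> Zy < Zz -> eta <= eps / 2 -> 0 < eta ->
  eta * (Rabs (2 * (Gz - eps * Zz) / eps) + 1) <= k1 -> - eta < (c + - Gy) / Zy ->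
  (c + Gz + - Gy) / (Zz + - Zy) < eps.
Proof.
  intros He Hk Hc HGy HZy HZ Hee Heta HK Hr.
  set (K := 2 * (Gz - eps * Zz) / eps) in *.
  assert (H1 : c - Gy < eta * - Zy).
  { apply (Rmult_lt_compat_r (- Zy)) in Hr; [|lra].
    replace ((c + - Gy) / Zy * - Zy) with (- (c - Gy)) in Hr by (field; lra). lra. }
  (* [c >= k1 >= eta (|K| + 1)] forces [-Zy > |K| + 1]. *)
  assert (H2 : Rabs K + 1 < - Zy).
  { apply (Rmult_lt_reg_l eta); lra. }
  pose proof (Rle_abs K).
  assert (H3 : Gz - eps * Zz < eps / 2 * - Zy).
  { assert (HK' : K < - Zy) by lra. unfold K in HK'.
    apply (Rmult_lt_compat_l (eps / 2)) in HK'; [|lra].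
    replace (eps / 2 * (2 * (Gz - eps * Zz) / eps)) with (Gz - eps * Zz) in HK' by (field; lra). exact HK'. }
  assert (H4 : eta * - Zy <= eps / 2 * - Zy) by (apply Rmult_le_compat_r; lra).
  apply (Rmult_lt_reg_r (Zz + - Zy)); [lra|].
  replace ((c + Gz + - Gy) / (Zz + - Zy) * (Zz + - Zy)) with (c + Gz + - Gy) by (field; lra). lra.
Qed.

Lemma quotient_lt_of_right_ratio c Gy Zy Gt Zt k1 eps eta :
  0 < eps -> 0 < k1 -> k1 <= c -> 0 <= Gt -> 0 < Zt -> Zy < Zt -> eta <= eps / 2 -> 0 < eta ->
  eta * (Rabs (2 * (eps * Zy - Gy) / eps) + 1) <= k1 -> (c + Gt) / Zt < eta ->
  (c + Gt + - Gy) / (Zt + - Zy) < eps.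
Proof.
  intros He Hk Hc HGt HZt HZ Hee Heta HK Hr.
  set (K := 2 * (eps * Zy - Gy) / eps) in *.
  assert (H1 : c + Gt < eta * Zt).
  { apply (Rmult_lt_compat_r Zt) in Hr; [|lra].
    replace ((c + Gt) / Zt * Zt) with (c + Gt) in Hr by (field; lra). lra. }
  assert (H2 : Rabs K + 1 < Zt) by (apply (Rmult_lt_reg_l eta); lra).
  pose proof (Rle_abs K).
  assert (H3 : eps * Zy - Gy < eps / 2 * Zt).
  { assert (HK' : K < Zt) by lra. unfold K in HK'.
    apply (Rmult_lt_compat_l (eps / 2)) in HK'; [|lra].
    replace (eps / 2 * (2 * (eps * Zy - Gy) / eps)) with (eps * Zy - Gy) in HK' by (field; lra). exact HK'. }
  assert (H4 : eta * Zt <= eps / 2 * Zt) by (apply Rmult_le_compat_r; lra).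
  apply (Rmult_lt_reg_r (Zt + - Zy)); [lra|].
  replace ((c + Gt + - Gy) / (Zt + - Zy) * (Zt + - Zy)) with (c + Gt + - Gy) by (field; lra). lra.
Qed.

Lemma quotient_add_lt c Gd D eta ep : 0 < D -> c / D < eta -> Gd <= ep * D -> (c + Gd) / D < eta + ep.
Proof.
  intros HD Hr HG. apply (Rmult_lt_compat_r D) in Hr; auto.
  replace (c / D * D) with c in Hr by (field; lra).
  apply (Rmult_lt_reg_r D); auto. replace ((c + Gd) / D * D) with (c + Gd) by (field; lra). lra.
Qed.

Lemma ex_weight_le k1 K ep : 0 < k1 -> 0 < ep ->
  exists eta, 0 < eta /\ eta <= ep / 2 /\ eta * (Rabs K + 1) <= k1.
Proof.
  intros Hk He. pose proof (Rabs_pos K).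
  exists (Rmin (ep / 2) (k1 / (Rabs K + 1))).
  split; [apply Rmin_pos; [lra|apply Rdiv_lt_0_compat; lra]|split; [apply Rmin_l|]].
  apply Rle_trans with (k1 / (Rabs K + 1) * (Rabs K + 1)); [apply Rmult_le_compat_r; [lra|apply Rmin_r]|].
  right; field; lra.
Qed.

Section InfiniteTail.
Variables (a b : Rbar).
Local Notation I := (inI a b).

Lemma Int_to_b_weighted_unbounded h k x0 :
  continuous_in a b h -> continuous_in a b k -> I x0 ->
  (forall t, I t -> 0 < h t) -> (forall t, I t -> 0 < k t) ->
  (forall K, exists z, x0 < z /\ I z /\ K < Rint k x0 z) ->
  Int_to_b b (fun u => (Rint h x0 u - Rint h x0 x0) * k u) x0 = PInf.
Proof.
  intros Hh Hk Hx0 Hhp Hkp Hunb.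
  set (H := fun u => Rint h x0 u - Rint h x0 x0).
  assert (HH : forall t, I t -> H t = Rint h x0 t).
  { intros t Ht. unfold H. rewrite (Rint_point a b h Hh); auto. ring. }
  assert (Hcont : continuous_in a b (fun u => H u * k u)).
  { intros x Hx. apply continuity_pt_mult_fun; [|apply Hk, Hx]. unfold H.
    apply continuity_pt_minus; [apply (continuous_in_Rint_upper a b)|apply continuity_pt_cst]; auto. }
  assert (Hmono : forall x y, I x -> I y -> x <= y -> H x * k y <= H y * k y).
  { intros x y Hx Hy Hxy. apply Rmult_le_compat_r; [left; apply Hkp, Hy|].
    rewrite !HH; auto. apply (Rint_le_upper a b); auto. intros t Ht. left; apply Hhp, (inI_between a b x y); auto; lra. }
  assert (Hpos : forall t, x0 < t -> I t -> 0 <= H t * k t).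
  { intros t Ht HtI. pose proof (Hmono x0 t Hx0 HtI ltac:(lra)). rewrite HH in H0 by auto.
    rewrite (Rint_point a b h Hh) in H0; auto. lra. }
  destruct (inI_above a b x0 Hx0) as [x1 [Hx01 Hx1]].
  apply (Int_to_b_unbounded a b); auto.
  apply (Rint_unbounded_compare a b _ k x0 x1 (H x1)); auto; try lra.
  - rewrite HH; auto. apply (Rint_gt0 a b); auto. intros t Ht. apply Hhp, (inI_between a b x0 x1); auto; lra.
  - intros t _ Ht; left; apply Hkp, Ht.
  - intros t Ht HtI. exact (Hmono x1 t Hx1 HtI ltac:(lra)).
Qed.

End InfiniteTail.

Section EndpointValues.
Variables (a b : Rbar) (c : R).
Local Notation I := (inI a b).
Hypothesis Hc : I c.

Lemma extE_nondecreasing_at_a (g : R -> R) al K : a = Fin al ->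
  (forall y z, I y -> I z -> y <= z -> g y <= g z) ->
  (forall w, w < c -> I w -> K <= g w) ->
  exists ga, extE a b g al = Fin ga /\ forall w, I w -> ga <= g w.
Proof.
  intros Ha Hmon HK.
  set (D := fun z => Rbar_lt a (Fin z) /\ z < c).
  assert (HD : forall z, D z -> I z).
  { intros z [H1 H2]. split; auto. destruct Hc as [_ H]. destruct b; simpl in *; auto; lra. }
  destruct (ex_is_sup_on (fun z => z < c /\ I z) (fun y => - g y) (- K)) as [L HL].
  { destruct (inI_below a b c Hc) as [z Hz]. exists z; exact Hz. }
  { intros z [Hz Dz]. specialize (HK z Hz Dz). lra. }
  assert (Hlim : filterlim (Rnbhd a) I (fun z => Fin (g z)) (Fin (- L))).
  { apply filterlim_Fin_opp; [apply Rnbhd_upward|].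
    apply (filterlim_nonincreasing_at_a a c I (fun y => - g y)); [intros z []; auto| |exact HL].
    intros z z' H1 H2 Dz Dz'. pose proof (Hmon z z' Dz Dz' H1). lra. }
  exists (- L). split.
  - rewrite extE_out; [|intros [H _]; rewrite Ha in H; simpl in H; lra].
    rewrite <- Ha. apply Rbar_limval_unique; auto.
    apply (Rnbhd_proper_at_a a c); [apply Hc|].
    intros z H1 H2. apply HD. split; auto.
  - intros w Hw. destruct (inI_below a b (Rmin w c)) as [w' [Hw'1 Hw'2]].
    { destruct (Rle_dec w c); [rewrite Rmin_left|rewrite Rmin_right]; auto; lra. }
    pose proof (Rmin_l w c); pose proof (Rmin_r w c).
    assert (Hw'c : w' < c) by lra. destruct HL as [HL _]. specialize (HL w' (conj Hw'c Hw'2)).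
    pose proof (Hmon w' w Hw'2 Hw ltac:(lra)). lra.
Qed.

Lemma extE_nondecreasing_at_b (g : R -> R) be K : b = Fin be ->
  (forall y z, I y -> I z -> y <= z -> g y <= g z) ->
  (forall w, c < w -> I w -> g w <= K) ->
  exists gb, extE a b g be = Fin gb /\ forall w, I w -> g w <= gb.
Proof.
  intros Hb Hmon HK.
  destruct (ex_is_sup_on (fun z => c < z /\ I z) g K) as [L HL].
  { destruct (inI_above a b c Hc) as [z Hz]. exists z; exact Hz. }
  { intros z [Hz Dz]. apply HK; auto. }
  assert (Hlim : filterlim (Rnbhd b) I (fun z => Fin (g z)) (Fin L)).
  { apply (filterlim_nondecreasing_at_b b c I g); [intros z []; auto| |exact HL].
    intros z z' H1 H2 Dz Dz'. apply Hmon; auto. }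
  exists L. split.
  - rewrite extE_out; [|intros [_ H]; rewrite Hb in H; simpl in H; lra].
    rewrite <- Hb. apply Rbar_limval_unique; auto.
    apply (Rnbhd_proper_at_b b c); [apply Hc|].
    intros z H1 H2. split; auto. destruct Hc as [H _]. destruct a; simpl in *; auto; lra.
  - intros w Hw. destruct (inI_above a b (Rmax w c)) as [w' [Hw'1 Hw'2]].
    { destruct (Rle_dec w c); [rewrite Rmax_right|rewrite Rmax_left]; auto; lra. }
    pose proof (Rmax_l w c); pose proof (Rmax_r w c).
    assert (Hcw' : c < w') by lra. destruct HL as [HL _]. specialize (HL w' (conj Hcw' Hw'2)).
    pose proof (Hmon w w' Hw Hw'2 ltac:(lra)). lra.
Qed.

End EndpointValues.

(** * Scale, speed and the ratio [F0] *)

Section Diffusion.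
Variables (a b : Rbar) (mu sigma : R -> R) (x0 : R) (a_refl : Prop) (c0 : R -> R) (c1 : R -> R -> Rbar).
Hypothesis HS : Setting a b mu sigma x0 a_refl.
Hypothesis HA : ConditionA a b mu sigma x0 a_refl.
Hypothesis HB : ConditionB a b mu sigma x0 a_refl c0 c1.

Local Notation I := (inI a b).
Local Notation s := (sdens mu sigma x0).
Local Notation m := (mdens mu sigma x0).
Local Notation E := (inE a b mu sigma x0).
Local Notation cont := (continuous_in a b).

Lemma a_lt_b : Rbar_lt a b.
Proof. apply HS. Qed.

Lemma x0_in : I x0.
Proof. apply HS. Qed.

Lemma inI_inE x : I x -> E x.
Proof. intros H; left; exact H. Qed.

Lemma sdens_pos x : 0 < s x.
Proof. apply exp_pos. Qed.

Lemma continuous_in_sdens : cont s.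
Proof.
  assert (Hdrift : cont (fun u => 2 * mu u / (sigma u) ^ 2)).
  { intros x Hx. destruct HS as [_ [_ [Hms _]]]. destruct (Hms x Hx) as [H1 [H2 H3]].
    apply continuity_pt_mult_fun; [apply continuity_pt_scal, H1|].
    apply continuity_pt_inv; [|apply pow_nonzero, H3].
    simpl. apply continuity_pt_mult_fun; [exact H2|apply continuity_pt_mult_fun; [exact H2|apply continuity_pt_cst]]. }
  intros x Hx. apply (continuity_pt_comp _ exp); [|apply derivable_continuous_pt, derivable_pt_exp].
  apply continuity_pt_opp, (continuous_in_Rint_upper a b); auto using x0_in.
Qed.

Lemma sigma2_sdens_pos x : I x -> 0 < (sigma x) ^ 2 * s x.
Proof.
  intros Hx. destruct HS as [_ [_ [Hms _]]]. destruct (Hms x Hx) as [_ [_ H]].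
  apply Rmult_lt_0_compat; [|apply sdens_pos].
  simpl. rewrite Rmult_1_r. exact (Rsqr_pos_lt _ H).
Qed.

Lemma mdens_pos x : I x -> 0 < m x.
Proof. intros Hx. apply Rinv_0_lt_compat, sigma2_sdens_pos, Hx. Qed.

Lemma continuous_in_mdens : cont m.
Proof.
  intros x Hx. apply continuity_pt_inv; [|apply Rgt_not_eq, sigma2_sdens_pos, Hx].
  destruct HS as [_ [_ [Hms _]]]. destruct (Hms x Hx) as [_ [H2 _]].
  apply continuity_pt_mult_fun; [|apply continuous_in_sdens, Hx]. simpl.
  apply continuity_pt_mult_fun; [exact H2|apply continuity_pt_mult_fun; [exact H2|apply continuity_pt_cst]].
Qed.

Lemma c0_nonneg x : E x -> 0 <= c0 x.
Proof. apply HB. Qed.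

Lemma c0_filterlim x : E x -> filterlim (Rnbhd (Fin x)) E (fun y => Fin (c0 y)) (Fin (c0 x)).
Proof. apply HB. Qed.

Lemma continuous_in_c0 : cont c0.
Proof.
  intros x Hx. apply continuity_pt_locally. intros eps.
  destruct (filterlim_Fin_elim _ _ (Rnbhd_upward (Fin x)) c0 (c0 x) (c0_filterlim x (inI_inE x Hx))
              eps (cond_pos eps)) as [d [Hd H]].
  destruct (inI_open a b x Hx) as [d2 [Hd2 H2]].
  exists (mkposreal (Rmin d d2) (Rmin_pos _ _ Hd Hd2)). intros y Hy.
  change (Rabs (y - x) < Rmin d d2) in Hy.
  pose proof (Rmin_l d d2); pose proof (Rmin_r d d2).
  apply H; [lra|]. apply inI_inE, H2; lra.
Qed.

Lemma S_unbounded_at_b K : exists z, x0 < z /\ I z /\ K < Rint s x0 z.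
Proof.
  destruct HA as [_ [HSb _]]. specialize (HSb x0 x0_in).
  destruct (Int_to_b_cases a b s x0 continuous_in_sdens x0_in (fun t _ _ => Rlt_le _ _ (sdens_pos t)))
    as [[L [HL _]]|[_ H]]; [rewrite HSb in HL; discriminate|exact (H K)].
Qed.

Lemma S_bounded_at_a : exists Sa, forall y, y < x0 -> I y -> Rint s y x0 <= Sa.
Proof.
  destruct HA as [HSa _]. destruct (HSa x0 x0_in) as [Sa HSa0].
  destruct (Int_from_a_cases a b s x0 continuous_in_sdens x0_in (fun t _ _ => Rlt_le _ _ (sdens_pos t)))
    as [[L [_ [H _]]]|[HL _]]; [|rewrite HSa0 in HL; discriminate].
  exists L. intros y Hy1 Hy2. apply H; auto.
Qed.

(* If [M[x0, b)] were infinite, both Feller integrals at [b] would diverge, making [b]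
   natural, and Condition A excludes an infinite speed measure at a natural [b]. *)
Lemma M_tail_finite : exists L, Int_to_b b m x0 = Fin L.
Proof.
  destruct (Int_to_b_cases a b m x0 continuous_in_mdens x0_in (fun t _ Ht => Rlt_le _ _ (mdens_pos t Ht)))
    as [[L [HL _]]|[HL Hunb]]; [exists L; exact HL|exfalso].
  assert (Hnat : natural_b b mu sigma x0).
  { split.
    - apply (Int_to_b_weighted_unbounded a b); auto using continuous_in_mdens, continuous_in_sdens,
        x0_in, mdens_pos, sdens_pos, S_unbounded_at_b.
    - apply (Int_to_b_weighted_unbounded a b); auto using continuous_in_mdens, continuous_in_sdens,
        x0_in, mdens_pos, sdens_pos. }
  destruct HA as [_ [_ [_ [Hfin _]]]]. destruct (Hfin Hnat x0 x0_in) as [r Hr].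
  rewrite Hr in HL. discriminate.
Qed.

Definition c0m2 (v : R) : R := 2 * c0 v * m v.
Definition Mtail0 : R := Rbar_real (Int_to_b b m x0).
Definition Ctail0 : R := Rbar_real (Int_to_b b c0m2 x0).
(* [Mtail u = M[u, b)] and [Ctail u = int_u^b 2 c0 dM] *)
Definition Mtail (u : R) : R := Mtail0 + Rint m u x0.
Definition Ctail (u : R) : R := Ctail0 + Rint c0m2 u x0.

Lemma Mtail0_eq : Int_to_b b m x0 = Fin Mtail0.
Proof. destruct M_tail_finite as [L HL]. unfold Mtail0. rewrite HL. reflexivity. Qed.

Lemma continuous_in_c0m2 : cont c0m2.
Proof.
  intros x Hx. apply continuity_pt_mult_fun; [|apply continuous_in_mdens, Hx].
  apply continuity_pt_scal, continuous_in_c0, Hx.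
Qed.

Lemma c0m2_nonneg t : I t -> 0 <= c0m2 t.
Proof.
  intros Ht. unfold c0m2. pose proof (c0_nonneg t (inI_inE t Ht)). pose proof (mdens_pos t Ht).
  apply Rmult_le_pos; lra.
Qed.

Lemma Ctail0_eq : Int_to_b b c0m2 x0 = Fin Ctail0.
Proof.
  destruct HB as [_ [_ [_ [_ [_ [_ [Hc0m _]]]]]]]. destruct (Hc0m x0 x0_in) as [L HL].
  assert (Hcm : cont (fun v => c0 v * m v)).
  { intros x Hx. apply continuity_pt_mult_fun; [apply continuous_in_c0|apply continuous_in_mdens]; auto. }
  assert (Hpos : forall t, x0 < t -> I t -> 0 <= c0 t * m t).
  { intros t _ Ht. pose proof (c0_nonneg t (inI_inE t Ht)). pose proof (mdens_pos t Ht). nra. }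
  destruct (Int_to_b_bounded a b c0m2 x0 continuous_in_c0m2 x0_in (fun t _ Ht => c0m2_nonneg t Ht) (2 * L))
    as [L' [HL' _]].
  - intros z Hz1 Hz2. unfold c0m2.
    rewrite (Rint_ext_in a b _ (fun v => 2 * (c0 v * m v))); auto using x0_in;
      [|intros t Ht; apply continuity_pt_scal, Hcm, Ht|intros t _; ring].
    rewrite (Rint_scal a b); auto using x0_in.
    pose proof (Int_to_b_ge_Rint a b _ x0 Hcm x0_in Hpos L z HL Hz1 Hz2). lra.
  - unfold Ctail0. rewrite HL'. reflexivity.
Qed.

Lemma Int_to_b_mdens u : I u -> Int_to_b b m u = Fin (Mtail u).
Proof.
  intros Hu. apply (Int_to_b_shift a b); auto using continuous_in_mdens, x0_in, Mtail0_eq.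
  intros t Ht; left; apply mdens_pos, Ht.
Qed.

Lemma Int_to_b_c0m2 u : I u -> Int_to_b b c0m2 u = Fin (Ctail u).
Proof.
  intros Hu. apply (Int_to_b_shift a b); auto using continuous_in_c0m2, x0_in, Ctail0_eq, c0m2_nonneg.
Qed.

Lemma Mtail_pos u : I u -> 0 < Mtail u.
Proof.
  intros Hu. apply (Int_to_b_Fin_pos a b m u); auto using continuous_in_mdens, mdens_pos, Int_to_b_mdens.
Qed.

Lemma Ctail_nonneg u : I u -> 0 <= Ctail u.
Proof.
  intros Hu. apply (Int_to_b_Fin_nonneg a b c0m2 u); auto using continuous_in_c0m2, c0m2_nonneg, Int_to_b_c0m2.
Qed.

Lemma Mtail0_pos : 0 < Mtail0.
Proof.
  pose proof (Mtail_pos x0 x0_in). unfold Mtail in H.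
  rewrite (Rint_point a b m continuous_in_mdens x0 x0_in) in H. lra.
Qed.

Lemma Ctail0_nonneg : 0 <= Ctail0.
Proof.
  pose proof (Ctail_nonneg x0 x0_in). unfold Ctail in H.
  rewrite (Rint_point a b c0m2 continuous_in_c0m2 x0 x0_in) in H. lra.
Qed.

Definition zeta_deriv (u : R) : R := 2 * Mtail u * s u.
Definition g0_deriv (u : R) : R := Ctail u * s u.

Lemma continuous_in_Mtail : cont Mtail.
Proof.
  intros x Hx. apply continuity_pt_plus_fun; [apply continuity_pt_cst|].
  apply (continuous_in_Rint_lower a b); auto using continuous_in_mdens, x0_in.
Qed.

Lemma continuous_in_Ctail : cont Ctail.
Proof.
  intros x Hx. apply continuity_pt_plus_fun; [apply continuity_pt_cst|].
  apply (continuous_in_Rint_lower a b); auto using continuous_in_c0m2, x0_in.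
Qed.

Lemma continuous_in_zeta_deriv : cont zeta_deriv.
Proof.
  intros x Hx. apply continuity_pt_mult_fun; [|apply continuous_in_sdens, Hx].
  apply continuity_pt_scal, continuous_in_Mtail, Hx.
Qed.

Lemma continuous_in_g0_deriv : cont g0_deriv.
Proof.
  intros x Hx. apply continuity_pt_mult_fun; [apply continuous_in_Ctail|apply continuous_in_sdens]; auto.
Qed.

Lemma zeta_deriv_pos u : I u -> 0 < zeta_deriv u.
Proof.
  intros Hu. pose proof (Mtail_pos u Hu). pose proof (sdens_pos u).
  unfold zeta_deriv. apply Rmult_lt_0_compat; lra.
Qed.

Lemma g0_deriv_nonneg u : I u -> 0 <= g0_deriv u.
Proof.
  intros Hu. pose proof (Ctail_nonneg u Hu). pose proof (sdens_pos u).
  unfold g0_deriv. apply Rmult_le_pos; lra.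
Qed.

Local Notation Z := (zetafun b mu sigma x0).
Local Notation G := (g0fun b mu sigma x0 c0).

Lemma zeta_Rint x : I x -> Z x = Rint zeta_deriv x0 x.
Proof.
  intros Hx. apply (Rint_ext_in a b); auto using continuous_in_zeta_deriv, x0_in.
  intros t Ht. unfold zeta_deriv. rewrite Int_to_b_mdens; auto.
Qed.

Lemma g0_Rint x : I x -> G x = Rint g0_deriv x0 x.
Proof.
  intros Hx. apply (Rint_ext_in a b); auto using continuous_in_g0_deriv, x0_in.
  intros t Ht. unfold g0_deriv. fold c0m2. rewrite Int_to_b_c0m2; auto.
Qed.

Lemma zeta_sub y z : I y -> I z -> Z z - Z y = Rint zeta_deriv y z.
Proof.
  intros Hy Hz. rewrite !zeta_Rint; auto.
  rewrite <- (Rint_Chasles a b zeta_deriv continuous_in_zeta_deriv x0 y z); auto using x0_in. ring.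
Qed.

Lemma g0_sub y z : I y -> I z -> G z - G y = Rint g0_deriv y z.
Proof.
  intros Hy Hz. rewrite !g0_Rint; auto.
  rewrite <- (Rint_Chasles a b g0_deriv continuous_in_g0_deriv x0 y z); auto using x0_in. ring.
Qed.

Lemma zeta_increasing y z : I y -> I z -> y < z -> Z y < Z z.
Proof.
  intros Hy Hz Hyz. assert (0 < Z z - Z y); [|lra]. rewrite zeta_sub; auto.
  apply (Rint_gt0 a b); auto using continuous_in_zeta_deriv.
  intros t Ht; apply zeta_deriv_pos, (inI_between a b y z); auto; lra.
Qed.

Lemma g0_nondecreasing y z : I y -> I z -> y <= z -> G y <= G z.
Proof.
  intros Hy Hz Hyz. assert (0 <= G z - G y); [|lra]. rewrite g0_sub; auto.
  apply (Rint_ge0 a b); auto using continuous_in_g0_deriv.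
  intros t Ht; apply g0_deriv_nonneg, (inI_between a b y z); auto; lra.
Qed.

Lemma zeta_x0 : Z x0 = 0.
Proof. rewrite zeta_Rint by apply x0_in. apply (Rint_point a b); auto using continuous_in_zeta_deriv, x0_in. Qed.

Lemma g0_x0 : G x0 = 0.
Proof. rewrite g0_Rint by apply x0_in. apply (Rint_point a b); auto using continuous_in_g0_deriv, x0_in. Qed.

(* [Msdens u = M[u, x0] s(u)], the integrand of Feller's [SigmaA] *)
Definition Msdens (u : R) : R := Rint m u x0 * s u.

Lemma continuous_in_Msdens : cont Msdens.
Proof.
  intros x Hx. apply continuity_pt_mult_fun; [|apply continuous_in_sdens, Hx].
  apply (continuous_in_Rint_lower a b); auto using continuous_in_mdens, x0_in.
Qed.

Lemma Msdens_nonneg t : I t -> t <= x0 -> 0 <= Msdens t.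
Proof.
  intros Ht Htx. apply Rmult_le_pos; [|left; apply sdens_pos].
  apply (Rint_ge0 a b); auto using continuous_in_mdens, x0_in.
  intros u Hu; left; apply mdens_pos, (inI_between a b t x0); auto using x0_in; lra.
Qed.

Lemma zeta_deriv_split u : zeta_deriv u = 2 * Mtail0 * s u + 2 * Msdens u.
Proof. unfold zeta_deriv, Mtail, Msdens. ring. Qed.

Lemma SigmaA_cases :
  (exists L, SigmaA a mu sigma x0 = Fin L /\ forall w, w < x0 -> I w -> Rint Msdens w x0 <= L) \/
  (SigmaA a mu sigma x0 = PInf /\ forall K, exists w, w < x0 /\ I w /\ K < Rint Msdens w x0).
Proof.
  set (f := fun u => (Mfun mu sigma x0 x0 - Mfun mu sigma x0 u) * s u).
  assert (Hfe : forall t, I t -> f t = Msdens t).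
  { intros t Ht. unfold f, Msdens, Mfun.
    rewrite (Rint_point a b m continuous_in_mdens x0 x0_in).
    rewrite (Rint_swap a b m continuous_in_mdens x0 t); auto using x0_in. ring. }
  assert (Hfc : cont f) by (apply (continuous_in_ext a b f Msdens); auto using continuous_in_Msdens).
  assert (HRint : forall w, I w -> Rint f w x0 = Rint Msdens w x0).
  { intros w Hw. apply (Rint_ext_in a b); auto using continuous_in_Msdens, x0_in. }
  destruct (Int_from_a_cases a b f x0 Hfc x0_in) as [[L [HL [H1 _]]]|[HL H]].
  - intros t Ht1 Ht2. rewrite Hfe; auto. apply Msdens_nonneg; auto; lra.
  - left. exists L. split; [exact HL|]. intros w Hw1 Hw2. rewrite <- HRint; auto.
  - right. split; [exact HL|]. intros K. destruct (H K) as [w [H1 [H2 H3]]].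
    exists w. rewrite <- HRint; auto.
Qed.

Local Notation ZE := (zetaE a b mu sigma x0).
Local Notation GE := (g0E a b mu sigma x0 c0).

Lemma zetaE_in x : I x -> ZE x = Fin (Z x).
Proof. apply extE_in. Qed.

Lemma g0E_in x : I x -> GE x = Fin (G x).
Proof. apply extE_in. Qed.

Lemma zetaE_attainable_a al : attainable_a a mu sigma x0 -> a = Fin al ->
  exists za, ZE al = Fin za /\ forall w, I w -> za < Z w.
Proof.
  intros Hat Ha. destruct S_bounded_at_a as [Sa HSa].
  destruct SigmaA_cases as [[Sg [_ HSg]]|[HSg _]];
    [|destruct Hat as [[[r Hr] _]|[[r Hr] _]]; rewrite HSg in Hr; discriminate].
  destruct (extE_nondecreasing_at_a a b x0 x0_in Z al (- (2 * Mtail0 * Sa + 2 * Sg)) Ha)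
    as [za [Hza1 Hza2]].
  - intros y z Hy Hz Hyz. destruct (Req_dec y z) as [->|Hne]; [lra|].
    left; apply zeta_increasing; auto; lra.
  - intros w Hw1 Hw2.
    assert (Z x0 - Z w <= 2 * Mtail0 * Sa + 2 * Sg); [|rewrite zeta_x0 in H; lra].
    rewrite zeta_sub; auto using x0_in.
    assert (Hcs : cont (fun u => 2 * Mtail0 * s u + 2 * Msdens u)).
    { intros t Ht. apply continuity_pt_plus_fun; apply continuity_pt_scal;
        [apply continuous_in_sdens|apply continuous_in_Msdens]; auto. }
    rewrite (Rint_ext_in a b _ _ w x0 Hcs (fun t _ => zeta_deriv_split t) Hw2 x0_in).
    rewrite (Rint_lin a b s Msdens); auto using continuous_in_sdens, continuous_in_Msdens, x0_in.
    pose proof (HSa w Hw1 Hw2). pose proof (HSg w Hw1 Hw2). pose proof Mtail0_pos.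
    assert (2 * Mtail0 * Rint s w x0 <= 2 * Mtail0 * Sa) by (apply Rmult_le_compat_l; lra). lra.
  - exists za. split; [exact Hza1|].
    intros w Hw. destruct (inI_below a b w Hw) as [w' [H1 H2]].
    pose proof (Hza2 w' H2). pose proof (zeta_increasing w' w H2 Hw H1). lra.
Qed.

Lemma c0_locally_bounded x : E x -> exists d, 0 < d /\ forall t, Rabs (t - x) < d -> E t -> c0 t < c0 x + 1.
Proof.
  intros Hx.
  destruct (filterlim_Fin_elim _ _ (Rnbhd_upward (Fin x)) c0 (c0 x) (c0_filterlim x Hx) 1 Rlt_0_1)
    as [d [Hd H]].
  exists d; split; auto. intros t Ht HtE. specialize (H t Ht HtE).
  unfold Rabs in H; destruct (Rcase_abs (c0 t - c0 x)); lra.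
Qed.

Lemma Rint_c0m2_le u v C : I u -> I v -> u <= v -> (forall t, u < t < v -> c0 t <= C) ->
  Rint c0m2 u v <= 2 * C * Rint m u v.
Proof.
  intros Hu Hv Huv HC. rewrite <- (Rint_scal a b m); auto using continuous_in_mdens.
  apply (Rint_le a b); auto using continuous_in_c0m2.
  - intros x Hx. apply continuity_pt_scal, continuous_in_mdens, Hx.
  - intros t Ht. assert (HtI : I t) by (apply (inI_between a b u v); auto; lra).
    unfold c0m2. pose proof (HC t Ht). pose proof (mdens_pos t HtI).
    pose proof (c0_nonneg t (inI_inE t HtI)). nra.
Qed.

Lemma Ctail_le_near_a x1 C u : I x1 -> x1 <= x0 -> I u -> u <= x1 -> 0 <= C ->
  (forall t, t < x1 -> I t -> c0 t <= C) ->
  Ctail u <= Ctail0 + Rint c0m2 x1 x0 + 2 * C * Rint m u x0.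
Proof.
  intros Hx1 Hx1x0 Hu Hux1 HC0 HC.
  pose proof (Rint_c0m2_le u x1 C Hu Hx1 Hux1 (fun t Ht => HC t ltac:(lra) ltac:(apply (inI_between a b u x1); auto; lra))).
  assert (Rint m u x1 <= Rint m u x0).
  { apply (Rint_le_upper a b); auto using continuous_in_mdens, x0_in.
    intros t Ht; left; apply mdens_pos, (inI_between a b x1 x0); auto using x0_in; lra. }
  unfold Ctail. rewrite <- (Rint_Chasles a b c0m2 continuous_in_c0m2 u x1 x0); auto using x0_in.
  assert (2 * C * Rint m u x1 <= 2 * C * Rint m u x0) by (apply Rmult_le_compat_l; lra). lra.
Qed.

Lemma c0_bounded_near_attainable_a al : attainable_a a mu sigma x0 -> a = Fin al ->
  exists x1 C, I x1 /\ x1 <= x0 /\ 0 <= C /\ forall t, t < x1 -> I t -> c0 t <= C.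
Proof.
  intros Hat Ha.
  assert (HalE : E al) by (right; left; split; auto).
  destruct (c0_locally_bounded al HalE) as [d [Hd Hc0]].
  assert (Halx0 : al < x0) by (pose proof x0_in as [H _]; rewrite Ha in H; exact H).
  pose proof (Rmin_l (al + d / 2) x0); pose proof (Rmin_r (al + d / 2) x0).
  assert (Hx1a : al < Rmin (al + d / 2) x0) by (apply Rmin_glb_lt; lra).
  exists (Rmin (al + d / 2) x0), (c0 al + 1). split; [|split; [lra|split]].
  - split; [rewrite Ha; simpl; lra|]. pose proof x0_in as [_ H']. destruct b; simpl in *; auto; lra.
  - pose proof (c0_nonneg al HalE); lra.
  - intros t Ht HtI. assert (al < t) by (destruct HtI as [H' _]; rewrite Ha in H'; exact H').
    left. apply Hc0; [rewrite Rabs_right; lra|apply inI_inE, HtI].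
Qed.

(* Near an attainable [a], [g0'] is dominated by a combination of [s] and [M[., x0] s],
   both integrable at [a]. *)
Lemma Rint_g0_deriv_bounded_at_attainable_a al : attainable_a a mu sigma x0 -> a = Fin al ->
  exists x1 B, I x1 /\ forall w, w < x1 -> I w -> Rint g0_deriv w x1 <= B.
Proof.
  intros Hat Ha. destruct S_bounded_at_a as [Sa HSa].
  destruct SigmaA_cases as [[Sg [_ HSg]]|[HSg _]];
    [|destruct Hat as [[[r Hr] _]|[[r Hr] _]]; rewrite HSg in Hr; discriminate].
  destruct (c0_bounded_near_attainable_a al Hat Ha) as [x1 [C [Hx1 [Hx1x0 [HC0 HC]]]]].
  set (K1 := Rint c0m2 x1 x0).
  assert (HK1 : 0 <= K1).
  { apply (Rint_ge0 a b); auto using continuous_in_c0m2, x0_in.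
    intros t Ht; apply c0m2_nonneg, (inI_between a b x1 x0); auto using x0_in; lra. }
  pose proof Ctail0_nonneg.
  exists x1, ((Ctail0 + K1) * Sa + 2 * C * Sg). split; [exact Hx1|].
  intros w Hw1 Hw2.
  assert (Hle : Rint g0_deriv w x1 <= Rint (fun u => (Ctail0 + K1) * s u + 2 * C * Msdens u) w x1).
  { apply (Rint_le a b); auto using continuous_in_g0_deriv; try lra.
    - intros x Hx. apply continuity_pt_plus_fun; apply continuity_pt_scal;
        [apply continuous_in_sdens|apply continuous_in_Msdens]; auto.
    - intros u Hu. assert (HuI : I u) by (apply (inI_between a b w x1); auto; lra).
      assert (Hux1 : u <= x1) by lra.
      pose proof (Ctail_le_near_a x1 C u Hx1 Hx1x0 HuI Hux1 HC0 HC). pose proof (sdens_pos u).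
      unfold g0_deriv, Msdens, K1.
      apply Rle_trans with ((Ctail0 + Rint c0m2 x1 x0 + 2 * C * Rint m u x0) * s u);
        [apply Rmult_le_compat_r; lra|right; ring]. }
  rewrite (Rint_lin a b s Msdens) in Hle; auto using continuous_in_sdens, continuous_in_Msdens.
  assert (Rint s w x1 <= Sa).
  { pose proof (HSa w ltac:(lra) Hw2).
    assert (Rint s w x1 <= Rint s w x0); [|lra].
    apply (Rint_le_upper a b); auto using continuous_in_sdens, x0_in; try lra.
    intros; left; apply sdens_pos. }
  assert (Rint Msdens w x1 <= Sg).
  { pose proof (HSg w ltac:(lra) Hw2).
    assert (Rint Msdens w x1 <= Rint Msdens w x0); [|lra].
    apply (Rint_le_upper a b); auto using continuous_in_Msdens, x0_in; try lra.
    intros t Ht. apply Msdens_nonneg; [apply (inI_between a b x1 x0); auto using x0_in|]; lra. }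
  assert ((Ctail0 + K1) * Rint s w x1 <= (Ctail0 + K1) * Sa) by (apply Rmult_le_compat_l; lra).
  assert (2 * C * Rint Msdens w x1 <= 2 * C * Sg) by (apply Rmult_le_compat_l; lra). lra.
Qed.

Lemma g0E_attainable_a al : attainable_a a mu sigma x0 -> a = Fin al ->
  exists ga, GE al = Fin ga /\ forall w, I w -> ga <= G w.
Proof.
  intros Hat Ha. destruct (Rint_g0_deriv_bounded_at_attainable_a al Hat Ha) as [x1 [B [Hx1 HB0]]].
  assert (HB0' : 0 <= B).
  { destruct (inI_below a b x1 Hx1) as [w [Hw1 Hw2]]. specialize (HB0 w Hw1 Hw2).
    assert (0 <= Rint g0_deriv w x1); [|lra].
    apply (Rint_ge0 a b); auto using continuous_in_g0_deriv; [lra|].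
    intros; apply g0_deriv_nonneg, (inI_between a b w x1); auto; lra. }
  destruct (extE_nondecreasing_at_a a b x0 x0_in G al (G x1 - B) Ha) as [ga [Hga1 Hga2]].
  - intros y z Hy Hz Hyz. apply g0_nondecreasing; auto.
  - intros w Hw1 Hw2. destruct (Rlt_dec w x1).
    + pose proof (g0_sub w x1 Hw2 Hx1). pose proof (HB0 w r Hw2). lra.
    + pose proof (g0_nondecreasing x1 w Hx1 Hw2 ltac:(lra)). lra.
  - exists ga; split; auto.
Qed.

(* [Smdens u = S[x0, u] m(u)], the integrand of Feller's [NB] *)
Definition Smdens (u : R) : R := Rint s x0 u * m u.

Lemma continuous_in_Smdens : cont Smdens.
Proof.
  intros x Hx. apply continuity_pt_mult_fun; [|apply continuous_in_mdens, Hx].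
  apply (continuous_in_Rint_upper a b); auto using continuous_in_sdens, x0_in.
Qed.

Lemma zeta_by_parts w : I w -> Z w = 2 * (Mtail w * Rint s x0 w + Rint Smdens x0 w).
Proof.
  intros Hw. set (Ms := fun u => Mtail u * s u).
  assert (HMs : cont Ms).
  { intros x Hx. apply continuity_pt_mult_fun; [apply continuous_in_Mtail|apply continuous_in_sdens]; auto. }
  assert (HZ : Z w = 2 * Rint Ms x0 w).
  { rewrite zeta_Rint, <- (Rint_scal a b Ms); auto using x0_in.
    apply (Rint_ext_in a b); auto using x0_in, continuous_in_zeta_deriv.
    - intros x Hx. apply continuity_pt_scal, HMs, Hx.
    - intros t _. unfold zeta_deriv, Ms. ring. }
  rewrite HZ. f_equal.
  set (Phi := fun t => Rint Ms x0 t - Mtail t * Rint s x0 t - Rint Smdens x0 t).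
  assert (Hd : forall x, I x -> is_derive Phi x 0).
  { intros x Hx.
    assert (H1 := is_derive_Rint_upper a b Ms HMs x0 x x0_in Hx).
    assert (H2 : is_derive Mtail x (0 + - m x)).
    { exact (is_derive_plus _ _ _ _ _ (is_derive_const Mtail0 x)
               (is_derive_Rint_lower a b m continuous_in_mdens x0 x x0_in Hx)). }
    assert (H3 := is_derive_Rint_upper a b s continuous_in_sdens x0 x x0_in Hx).
    assert (H4 := is_derive_mult _ _ _ _ _ H2 H3 Rmult_comm).
    assert (H5 := is_derive_Rint_upper a b Smdens continuous_in_Smdens x0 x x0_in Hx).
    assert (H6 := is_derive_minus _ _ _ _ _ (is_derive_minus _ _ _ _ _ H1 H4) H5).
    replace 0 with (minus (minus (Ms x) (plus (mult (0 + - m x) (Rint s x0 x)) (mult (Mtail x) (s x))))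
                      (Smdens x)); [exact H6|].
    unfold Ms, Smdens, minus, plus, mult, opp; simpl. ring. }
  assert (HwI : forall x, Rmin x0 w <= x <= Rmax x0 w -> I x) by (intros x Hx; apply (inI_segment a b x0 w x); auto using x0_in).
  destruct (MVT_gen Phi x0 w (fun _ => 0)) as [c [_ HPhi]].
  - intros x Hx. apply Hd, HwI; lra.
  - intros x Hx. apply (is_derive_continuity_pt _ _ 0), Hd, HwI, Hx.
  - unfold Phi in HPhi.
    rewrite (Rint_point a b Ms HMs x0 x0_in), (Rint_point a b s continuous_in_sdens x0 x0_in),
      (Rint_point a b Smdens continuous_in_Smdens x0 x0_in) in HPhi. lra.
Qed.

Lemma zeta_le_NB N : NB b mu sigma x0 = Fin N -> forall w, x0 < w -> I w -> Z w <= 2 * N.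
Proof.
  intros HN w Hxw Hw.
  assert (HNsm : Int_to_b b Smdens x0 = Fin N).
  { rewrite <- HN. unfold NB. f_equal. apply functional_extensionality; intro u.
    unfold Smdens, Sfun. rewrite (Rint_point a b s continuous_in_sdens x0 x0_in). ring. }
  assert (HSm : forall t, x0 < t -> I t -> 0 <= Smdens t).
  { intros t Ht HtI. apply Rmult_le_pos; [|left; apply mdens_pos, HtI].
    apply (Rint_ge0 a b); auto using continuous_in_sdens, x0_in; [lra|]. intros; left; apply sdens_pos. }
  assert (HSw : 0 < Rint s x0 w).
  { apply (Rint_gt0 a b); auto using continuous_in_sdens, x0_in. intros; apply sdens_pos. }
  assert (Hkey : Mtail w * Rint s x0 w <= N - Rint Smdens x0 w).
  { apply (Rmult_le_reg_r (/ Rint s x0 w)); [apply Rinv_0_lt_compat, HSw|].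
    rewrite Rmult_assoc, Rinv_r, Rmult_1_r by lra.
    apply (is_sup_on_le _ _ _ _ (Int_to_b_is_sup a b m w continuous_in_mdens Hw
             (fun t _ Ht => Rlt_le _ _ (mdens_pos t Ht)) _ (Int_to_b_mdens w Hw))).
    intros z [Hz1 Hz2].
    apply (Rmult_le_reg_r (Rint s x0 w)); [exact HSw|].
    rewrite Rmult_assoc, Rinv_l, Rmult_1_r by lra.
    assert (Rint s x0 w * Rint m w z <= Rint Smdens w z).
    { rewrite <- (Rint_scal a b m); auto using continuous_in_mdens.
      apply (Rint_le a b); auto using continuous_in_Smdens; try lra.
      - intros x Hx. apply continuity_pt_scal, continuous_in_mdens, Hx.
      - intros t Ht. assert (HtI : I t) by (apply (inI_between a b w z); auto; lra).
        unfold Smdens. apply Rmult_le_compat_r; [left; apply mdens_pos, HtI|].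
        apply (Rint_le_upper a b); auto using continuous_in_sdens, x0_in; try lra.
        intros; left; apply sdens_pos. }
    pose proof (Int_to_b_ge_Rint a b Smdens x0 continuous_in_Smdens x0_in HSm N z HNsm ltac:(lra) Hz2).
    rewrite <- (Rint_Chasles a b Smdens continuous_in_Smdens x0 w z) in H0; auto using x0_in. lra. }
  rewrite zeta_by_parts; auto. lra.
Qed.

Lemma zetaE_entrance_b be : entrance_b b mu sigma x0 -> b = Fin be ->
  exists zb, ZE be = Fin zb /\ forall w, I w -> Z w < zb.
Proof.
  intros [_ [N HN]] Hb.
  destruct (extE_nondecreasing_at_b a b x0 x0_in Z be (2 * N) Hb) as [zb [Hzb1 Hzb2]].
  - intros y z Hy Hz Hyz. destruct (Req_dec y z) as [->|Hne]; [lra|].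
    left; apply zeta_increasing; auto; lra.
  - intros w Hw1 Hw2. apply zeta_le_NB; auto.
  - exists zb. split; [exact Hzb1|].
    intros w Hw. destruct (inI_above a b w Hw) as [w' [H1 H2]].
    pose proof (Hzb2 w' H2). pose proof (zeta_increasing w w' Hw H2 H1). lra.
Qed.

Lemma Ctail_le_Mtail u C : I u -> (forall t, u < t -> I t -> c0 t <= C) -> Ctail u <= 2 * C * Mtail u.
Proof.
  intros Hu HC.
  assert (HC0 : 0 <= C).
  { destruct (inI_above a b u Hu) as [t [Ht1 Ht2]].
    pose proof (HC t Ht1 Ht2). pose proof (c0_nonneg t (inI_inE t Ht2)). lra. }
  apply (is_sup_on_le _ _ _ _ (Int_to_b_is_sup a b c0m2 u continuous_in_c0m2 Hu
           (fun t _ Ht => c0m2_nonneg t Ht) _ (Int_to_b_c0m2 u Hu))).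
  intros z [Hz1 Hz2].
  pose proof (Rint_c0m2_le u z C Hu Hz2 ltac:(lra)
                (fun t Ht => HC t ltac:(lra) ltac:(apply (inI_between a b u z); auto; lra))).
  pose proof (Int_to_b_ge_Rint a b m u continuous_in_mdens Hu
                (fun t _ Ht => Rlt_le _ _ (mdens_pos t Ht)) _ z (Int_to_b_mdens u Hu) Hz1 Hz2).
  assert (2 * C * Rint m u z <= 2 * C * Mtail u) by (apply Rmult_le_compat_l; lra). lra.
Qed.

Lemma g0_deriv_le_zeta_deriv u C : I u -> (forall t, u < t -> I t -> c0 t <= C) ->
  g0_deriv u <= C * zeta_deriv u.
Proof.
  intros Hu HC. pose proof (Ctail_le_Mtail u C Hu HC). pose proof (sdens_pos u).
  unfold g0_deriv, zeta_deriv.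
  apply Rle_trans with ((2 * C * Mtail u) * s u); [apply Rmult_le_compat_r; lra|right; ring].
Qed.

Lemma g0_sub_le_zeta_sub u v C : I u -> I v -> u <= v -> 0 <= C ->
  (forall t, u < t < v -> g0_deriv t <= C * zeta_deriv t) -> G v - G u <= C * (Z v - Z u).
Proof.
  intros Hu Hv Huv HC H. rewrite g0_sub, zeta_sub; auto.
  rewrite <- (Rint_scal a b zeta_deriv); auto using continuous_in_zeta_deriv.
  apply (Rint_le a b); auto using continuous_in_g0_deriv.
  intros x Hx. apply continuity_pt_scal, continuous_in_zeta_deriv, Hx.
Qed.

(* Near an entrance [b], [g0' <= C zeta'] and [zeta] is bounded by [2 NB]. *)
Lemma g0E_entrance_b be : entrance_b b mu sigma x0 -> b = Fin be ->
  exists gb, GE be = Fin gb /\ forall w, I w -> G w <= gb.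
Proof.
  intros Hen Hb. pose proof Hen as [_ [N HN]].
  assert (HbE : E be) by (right; right; split; auto).
  destruct (c0_locally_bounded be HbE) as [d [Hd Hc0]].
  assert (Hx0b : x0 < be) by (pose proof x0_in as [_ H]; rewrite Hb in H; exact H).
  pose proof (Rmax_l (be - d / 2) x0); pose proof (Rmax_r (be - d / 2) x0).
  set (x1 := Rmax (be - d / 2) x0) in *.
  assert (Hx1b : x1 < be) by (apply Rmax_lub_lt; lra).
  assert (Hx1 : I x1).
  { split; [|rewrite Hb; simpl; lra]. pose proof x0_in as [H' _]. destruct a; simpl in *; auto; lra. }
  set (C := c0 be + 1).
  assert (HC : 0 <= C) by (pose proof (c0_nonneg be HbE); unfold C; lra).
  assert (Hg0 : forall u, x1 < u -> I u -> g0_deriv u <= C * zeta_deriv u).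
  { intros u Hu1 Hu2. apply g0_deriv_le_zeta_deriv; auto. intros t Ht HtI.
    assert (t < be) by (destruct HtI as [_ H']; rewrite Hb in H'; exact H').
    left. apply Hc0; [rewrite Rabs_left; lra|apply inI_inE, HtI]. }
  set (K := G x1 + C * Rabs (2 * N - Z x1)).
  destruct (extE_nondecreasing_at_b a b x0 x0_in G be K Hb) as [gb [Hgb1 Hgb2]].
  - intros y z Hy Hz Hyz. apply g0_nondecreasing; auto.
  - intros w Hw1 Hw2. unfold K.
    pose proof (Rle_abs (2 * N - Z x1)). pose proof (Rabs_pos (2 * N - Z x1)).
    assert (C * (2 * N - Z x1) <= C * Rabs (2 * N - Z x1)) by (apply Rmult_le_compat_l; lra).
    assert (0 <= C * Rabs (2 * N - Z x1)) by (apply Rmult_le_pos; lra).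
    destruct (Rlt_dec x1 w).
    + pose proof (g0_sub_le_zeta_sub x1 w C Hx1 Hw2 ltac:(lra) HC
                    (fun t Ht => Hg0 t ltac:(lra) ltac:(apply (inI_between a b x1 w); auto; lra))).
      pose proof (zeta_le_NB N HN w Hw1 Hw2).
      assert (C * (Z w - Z x1) <= C * (2 * N - Z x1)) by (apply Rmult_le_compat_l; lra). lra.
    + pose proof (g0_nondecreasing w x1 Hw2 Hx1 ltac:(lra)). lra.
  - exists gb; split; auto.
Qed.

Lemma natural_a_not_attainable : natural_a a mu sigma x0 -> ~ attainable_a a mu sigma x0.
Proof. intros [H _] [[[r Hr] _]|[[r Hr] _]]; rewrite H in Hr; discriminate. Qed.

Lemma natural_b_not_entrance : natural_b b mu sigma x0 -> ~ entrance_b b mu sigma x0.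
Proof. intros [_ H] [_ [r Hr]]. rewrite H in Hr; discriminate. Qed.

Lemma inE_bounds x : E x -> Rbar_le a (Fin x) /\ Rbar_le (Fin x) b.
Proof.
  pose proof a_lt_b.
  intros [[H1 H2]|[[Hx _]|[Hx _]]]; [split; apply Rbar_lt_le; auto| |]; rewrite <- Hx in *; split;
    auto using Rbar_le_refl, Rbar_lt_le.
Qed.

Lemma inE_midpoint x y : E x -> E y -> x < y -> I ((x + y) / 2).
Proof.
  intros Hx Hy Hxy. destruct (inE_bounds x Hx) as [Hax _]. destruct (inE_bounds y Hy) as [_ Hyb].
  split; [destruct a|destruct b]; simpl in *; auto; lra.
Qed.

Definition zetaR (x : R) : R := Rbar_real (ZE x).
Definition g0R (x : R) : R := Rbar_real (GE x).

Lemma zetaR_g0R_in x : I x -> zetaR x = Z x /\ g0R x = G x.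
Proof. intros Hx. unfold zetaR, g0R. rewrite zetaE_in, g0E_in; auto. Qed.

Lemma inE_Fin x : E x -> ZE x = Fin (zetaR x) /\ GE x = Fin (g0R x).
Proof.
  intros [Hx|[[Ha Hat]|[Hb Hen]]]; unfold zetaR, g0R.
  - rewrite zetaE_in, g0E_in; auto.
  - destruct (zetaE_attainable_a x Hat (eq_sym Ha)) as [za [-> _]].
    destruct (g0E_attainable_a x Hat (eq_sym Ha)) as [ga [-> _]]. auto.
  - destruct (zetaE_entrance_b x Hen (eq_sym Hb)) as [zb [-> _]].
    destruct (g0E_entrance_b x Hen (eq_sym Hb)) as [gb [-> _]]. auto.
Qed.

Lemma inE_compare x w : E x -> I w ->
  (x < w -> zetaR x < Z w /\ g0R x <= G w) /\ (w < x -> Z w < zetaR x /\ G w <= g0R x).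
Proof.
  intros [Hx|[[Ha Hat]|[Hb Hen]]] Hw.
  - destruct (zetaR_g0R_in x Hx) as [-> ->].
    split; intros; (split; [apply zeta_increasing|apply g0_nondecreasing]); auto; lra.
  - unfold zetaR, g0R.
    destruct (zetaE_attainable_a x Hat (eq_sym Ha)) as [za [-> Hza]].
    destruct (g0E_attainable_a x Hat (eq_sym Ha)) as [ga [-> Hga]].
    split; [simpl; auto|intros Hwx; destruct Hw as [H _]; rewrite <- Ha in H; simpl in H; lra].
  - unfold zetaR, g0R.
    destruct (zetaE_entrance_b x Hen (eq_sym Hb)) as [zb [-> Hzb]].
    destruct (g0E_entrance_b x Hen (eq_sym Hb)) as [gb [-> Hgb]].
    split; [intros Hxw; destruct Hw as [_ H]; rewrite <- Hb in H; simpl in H; lra|simpl; auto].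
Qed.

Lemma inE_monotone x y : E x -> E y -> x < y -> zetaR x < zetaR y /\ g0R x <= g0R y.
Proof.
  intros Hx Hy Hxy. pose proof (inE_midpoint x y Hx Hy Hxy) as Hw.
  destruct (inE_compare x _ Hx Hw) as [H1 _]. destruct (inE_compare y _ Hy Hw) as [_ H2].
  destruct (H1 ltac:(lra)), (H2 ltac:(lra)). lra.
Qed.

Local Notation F := (F0 a b mu sigma x0 c0 c1).

Lemma c1_lower_bound : exists k1, 0 < k1 /\ forall y z, E y -> E z -> y <= z -> Rbar_le (Fin k1) (c1 y z).
Proof. apply HB. Qed.

Lemma F0_Fin y z c : E y -> E z -> y < z -> c1 y z = Fin c ->
  F y z = Fin ((c + g0R z + - g0R y) / (zetaR z + - zetaR y)).
Proof.
  intros Hy Hz Hyz Hc. unfold F0. destruct (Rlt_dec y z); [|lra].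
  destruct (inE_Fin y Hy) as [-> ->]. destruct (inE_Fin z Hz) as [-> ->].
  rewrite Hc. reflexivity.
Qed.

Lemma F0_PInf y z : E y -> E z -> y < z -> c1 y z = PInf -> F y z = PInf.
Proof.
  intros Hy Hz Hyz Hc. unfold F0. destruct (Rlt_dec y z); [|lra].
  destruct (inE_Fin y Hy) as [-> ->]. destruct (inE_Fin z Hz) as [-> ->].
  rewrite Hc. simpl. destruct (inE_monotone y z Hy Hz Hyz) as [Hm _].
  destruct (Rlt_dec 0 (zetaR z + - zetaR y)); [reflexivity|lra].
Qed.

Lemma F0_pos y z : E y -> E z -> y < z -> F y z = PInf \/ exists v, F y z = Fin v /\ 0 < v.
Proof.
  intros Hy Hz Hyz. destruct c1_lower_bound as [k1 [Hk1 Hk]]. pose proof (Hk y z Hy Hz ltac:(lra)) as Hc.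
  destruct (c1 y z) as [c| |] eqn:Ec; simpl in Hc; [|left; apply F0_PInf; auto|contradiction].
  right. eexists; split; [apply F0_Fin; eauto|].
  destruct (inE_monotone y z Hy Hz Hyz). apply Rdiv_lt_0_compat; lra.
Qed.

Lemma M_unbounded_at_natural_a : natural_a a mu sigma x0 ->
  forall K, exists w, w < x0 /\ I w /\ K < Rint m w x0.
Proof.
  intros Hnat K. apply NNPP; intro Hn.
  assert (HK : forall w, w < x0 -> I w -> Rint m w x0 <= K).
  { intros w Hw1 Hw2. apply Rnot_lt_le; intro; apply Hn; exists w; auto. }
  destruct S_bounded_at_a as [Sa HSa].
  destruct SigmaA_cases as [[L [HL _]]|[_ Hunb]]; [destruct Hnat as [HP _]; rewrite HP in HL; discriminate|].
  set (K' := Rmax K 0). pose proof (Rmax_l K 0); pose proof (Rmax_r K 0).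
  destruct (Hunb (K' * Sa)) as [y [Hy1 [Hy2 Hy3]]].
  assert (Rint Msdens y x0 <= Rint (fun u => K' * s u) y x0).
  { apply (Rint_le a b); auto using continuous_in_Msdens, x0_in; try lra.
    - intros x Hx. apply continuity_pt_scal, continuous_in_sdens, Hx.
    - intros t Ht. assert (HtI : I t) by (apply (inI_between a b y x0); auto using x0_in; lra).
      unfold Msdens. apply Rmult_le_compat_r; [left; apply sdens_pos|].
      assert (Rint m t x0 <= K) by (apply HK; auto; lra). unfold K'. lra. }
  rewrite (Rint_scal a b s) in H1; auto using continuous_in_sdens, x0_in.
  pose proof (HSa y Hy1 Hy2).
  assert (K' * Rint s y x0 <= K' * Sa) by (apply Rmult_le_compat_l; unfold K'; lra). lra.
Qed.

Lemma inE_natural_a x : natural_a a mu sigma x0 -> E x -> x < x0 -> I x.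
Proof.
  intros Hnat [Hx|[[Ha Hat]|[Hb Hen]]] Hxx0; auto.
  - exfalso. exact (natural_a_not_attainable Hnat Hat).
  - exfalso. pose proof x0_in as [_ H]. rewrite <- Hb in H. simpl in H. lra.
Qed.

Lemma inE_natural_b x : natural_b b mu sigma x0 -> E x -> x0 < x -> I x.
Proof.
  intros Hnat [Hx|[[Ha Hat]|[Hb Hen]]] Hxx0; auto.
  - exfalso. pose proof x0_in as [H _]. rewrite <- Ha in H. simpl in H. lra.
  - exfalso. exact (natural_b_not_entrance Hnat Hen).
Qed.

Lemma inE_natural_a_gt al x : a = Fin al -> natural_a a mu sigma x0 -> E x -> al < x.
Proof.
  intros Ha Hnat Hx. destruct (Rlt_dec x x0).
  - pose proof (inE_natural_a x Hnat Hx r) as [H _]. rewrite Ha in H. exact H.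
  - pose proof x0_in as [H _]. rewrite Ha in H. simpl in H. lra.
Qed.

Lemma inE_natural_b_lt be x : b = Fin be -> natural_b b mu sigma x0 -> E x -> x < be.
Proof.
  intros Hb Hnat Hx. destruct (Rlt_dec x0 x).
  - pose proof (inE_natural_b x Hnat Hx r) as [_ H]. rewrite Hb in H. exact H.
  - pose proof x0_in as [_ H]. rewrite Hb in H. simpl in H. lra.
Qed.

(* Since [M[t, x0]] blows up at a natural [a] while [c0] vanishes there, [Ctail] becomes
   negligible against [Mtail]. *)
Lemma g0_deriv_small_at_natural_a al : a = Fin al -> natural_a a mu sigma x0 ->
  filterlim (Rnbhd a) I (fun x => Fin (c0 x)) (Fin 0) ->
  forall ep, 0 < ep -> exists w1, I w1 /\ forall t, I t -> t < w1 -> g0_deriv t <= ep * zeta_deriv t.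
Proof.
  intros Ha Hnat Hc0 ep Hep.
  pose proof (filterlim_Fin_elim _ _ (Rnbhd_upward a) c0 0 Hc0 (ep / 2) ltac:(lra)) as Hn.
  rewrite Ha in Hn at 1. destruct Hn as [d [Hd Hc]].
  assert (Halx0 : al < x0) by (pose proof x0_in as [H _]; rewrite Ha in H; exact H).
  pose proof (Rmin_l (al + d / 2) x0); pose proof (Rmin_r (al + d / 2) x0).
  set (x1 := Rmin (al + d / 2) x0) in *.
  assert (Hx1a : al < x1) by (apply Rmin_glb_lt; lra).
  assert (Hx1 : I x1).
  { split; [rewrite Ha; simpl; lra|]. pose proof x0_in as [_ H']. destruct b; simpl in *; auto; lra. }
  assert (HC : forall t, t < x1 -> I t -> c0 t <= ep / 2).
  { intros t Ht HtI. assert (al < t) by (destruct HtI as [H' _]; rewrite Ha in H'; exact H').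
    assert (Hct : Rabs (c0 t - 0) < ep / 2) by (apply Hc; [rewrite Rabs_right; lra|exact HtI]).
    rewrite Rminus_0_r in Hct. pose proof (Rle_abs (c0 t)). lra. }
  set (K1 := Rint c0m2 x1 x0).
  pose proof Ctail0_nonneg. pose proof Mtail0_pos.
  destruct (M_unbounded_at_natural_a Hnat ((Ctail0 + K1) / ep)) as [w1' [Hw1 [Hw2 Hw3]]].
  assert (HK : Ctail0 + K1 <= ep * Rint m w1' x0).
  { apply (Rmult_lt_compat_l ep) in Hw3; auto.
    replace (ep * ((Ctail0 + K1) / ep)) with (Ctail0 + K1) in Hw3 by (field; lra). lra. }
  pose proof (Rmin_l w1' x1); pose proof (Rmin_r w1' x1).
  exists (Rmin w1' x1). split.
  { destruct (Rle_dec w1' x1); [rewrite Rmin_left|rewrite Rmin_right]; auto; lra. }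
  intros t HtI Ht.
  pose proof (Ctail_le_near_a x1 (ep / 2) t Hx1 ltac:(lra) HtI ltac:(lra) ltac:(lra) HC) as HCt.
  assert (Rint m w1' x0 <= Rint m t x0).
  { apply (Rint_le_lower a b m t w1' x0); auto using continuous_in_mdens, x0_in; try lra.
    intros r Hr; left; apply mdens_pos, (inI_between a b t w1'); auto; lra. }
  assert (Ctail t <= 2 * ep * Mtail t).
  { unfold Mtail. fold K1 in HCt.
    assert (ep * Rint m w1' x0 <= ep * Rint m t x0) by (apply Rmult_le_compat_l; lra).
    assert (ep * Rint m t x0 <= ep * (Mtail0 + Rint m t x0)) by (apply Rmult_le_compat_l; lra). lra. }
  pose proof (sdens_pos t). unfold g0_deriv, zeta_deriv.
  apply Rle_trans with ((2 * ep * Mtail t) * s t); [apply Rmult_le_compat_r; lra|right; ring].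
Qed.

Lemma g0_deriv_small_at_natural_b be : b = Fin be ->
  filterlim (Rnbhd b) I (fun x => Fin (c0 x)) (Fin 0) ->
  forall ep, 0 < ep -> exists w1, I w1 /\ forall t, I t -> w1 < t -> g0_deriv t <= ep * zeta_deriv t.
Proof.
  intros Hb Hc0 ep Hep.
  pose proof (filterlim_Fin_elim _ _ (Rnbhd_upward b) c0 0 Hc0 ep Hep) as Hn.
  rewrite Hb in Hn at 1. destruct Hn as [d [Hd Hc]].
  assert (Hx0b : x0 < be) by (pose proof x0_in as [_ H]; rewrite Hb in H; exact H).
  pose proof (Rmax_l (be - d / 2) x0); pose proof (Rmax_r (be - d / 2) x0).
  set (x1 := Rmax (be - d / 2) x0) in *.
  assert (Hx1b : x1 < be) by (apply Rmax_lub_lt; lra).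
  exists x1. split.
  { split; [|rewrite Hb; simpl; lra]. pose proof x0_in as [H' _]. destruct a; simpl in *; auto; lra. }
  intros t HtI Ht. apply g0_deriv_le_zeta_deriv; auto.
  intros r Hr HrI. assert (r < be) by (destruct HrI as [_ H']; rewrite Hb in H'; exact H').
  assert (Hcr : Rabs (c0 r - 0) < ep) by (apply Hc; [rewrite Rabs_left; lra|exact HrI]).
  rewrite Rminus_0_r in Hcr. pose proof (Rle_abs (c0 r)). lra.
Qed.

Definition F0_arbitrarily_small : Prop :=
  forall ep, 0 < ep -> exists y z, E y /\ E z /\ y < z /\ exists v, F y z = Fin v /\ v < ep.

Lemma F0_lt_of_quotient y z ep : E y -> E z -> y < z -> c1 y z <> PInf ->
  (forall c, c1 y z = Fin c -> (c + g0R z + - g0R y) / (zetaR z + - zetaR y) < ep) ->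
  exists v, F y z = Fin v /\ v < ep.
Proof.
  intros Hy Hz Hyz Hinf H. destruct c1_lower_bound as [k1 [_ Hk]].
  pose proof (Hk y z Hy Hz ltac:(lra)) as Hc.
  destruct (c1 y z) as [c| |] eqn:Ec; [|contradiction|contradiction].
  eexists; split; [apply F0_Fin; eauto|apply H; reflexivity].
Qed.

Lemma F0_small_a al z : a = Fin al -> natural_a a mu sigma x0 -> E z ->
  Rbar_liminf (Rnbhd a) (fun y => E y /\ y < z)
    (fun y => Rbar_div (Rbar_minus (c1 y z) (GE y)) (ZE y)) = Fin 0 -> F0_arbitrarily_small.
Proof.
  intros Ha Hnat Hz Hlim ep Hep. destruct c1_lower_bound as [k1 [Hk1 Hk]].
  destruct (ex_weight_le k1 (2 * (g0R z - ep * zetaR z) / ep) ep Hk1 Hep) as [eta [He1 [He2 He3]]].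
  destruct (liminf_eq_0_eventually_gt _ _ _ Hlim eta He1) as [P [HP HPr]].
  rewrite Ha in HP. destruct HP as [d [Hd HPd]].
  pose proof (inE_natural_a_gt al z Ha Hnat Hz) as Halz.
  assert (Halx0 : al < x0) by (pose proof x0_in as [H _]; rewrite Ha in H; exact H).
  set (y := al + Rmin (Rmin d (x0 - al)) (z - al) / 2).
  assert (Hq : 0 < Rmin (Rmin d (x0 - al)) (z - al)) by (apply Rmin_pos; [apply Rmin_pos|]; lra).
  pose proof (Rmin_l (Rmin d (x0 - al)) (z - al)); pose proof (Rmin_r (Rmin d (x0 - al)) (z - al)).
  pose proof (Rmin_l d (x0 - al)); pose proof (Rmin_r d (x0 - al)).
  assert (Hyz : y < z) by (unfold y; lra).
  assert (Hyx0 : y < x0) by (unfold y; lra).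
  assert (HyI : I y).
  { split; [rewrite Ha; simpl; unfold y; lra|]. pose proof x0_in as [_ H'].
    apply (Rbar_lt_le_trans _ (Fin x0)); [simpl; lra|apply Rbar_lt_le, H']. }
  specialize (HPr y (HPd y ltac:(unfold y; rewrite Rabs_right; lra)) (conj (inI_inE y HyI) Hyz)).
  rewrite zetaE_in, g0E_in in HPr; auto.
  pose proof (zeta_increasing y x0 HyI x0_in Hyx0) as HZy. rewrite zeta_x0 in HZy.
  pose proof (g0_nondecreasing y x0 HyI x0_in ltac:(lra)) as HGy. rewrite g0_x0 in HGy.
  exists y, z. split; [apply inI_inE, HyI|]. do 2 (split; auto).
  apply F0_lt_of_quotient; auto using inI_inE.
  - intros Hc. rewrite Hc in HPr. simpl in HPr.
    destruct (Rlt_dec 0 (Z y)); [lra|]. destruct (Rlt_dec (Z y) 0); [exact HPr|lra].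
  - intros c Hc. rewrite Hc in HPr.
    destruct (zetaR_g0R_in y HyI) as [-> ->].
    destruct (inE_monotone y z (inI_inE y HyI) Hz Hyz) as [Hm _]. rewrite (proj1 (zetaR_g0R_in y HyI)) in Hm.
    pose proof (Hk y z (inI_inE y HyI) Hz ltac:(lra)) as Hck. rewrite Hc in Hck.
    apply (quotient_lt_of_left_ratio c (G y) (Z y) (g0R z) (zetaR z) k1 ep eta); auto.
Qed.

Lemma F0_small_b be y : b = Fin be -> natural_b b mu sigma x0 -> E y ->
  Rbar_liminf (Rnbhd b) (fun z => E z /\ y < z)
    (fun z => Rbar_div (Rbar_plus (c1 y z) (GE z)) (ZE z)) = Fin 0 -> F0_arbitrarily_small.
Proof.
  intros Hb Hnat Hy Hlim ep Hep. destruct c1_lower_bound as [k1 [Hk1 Hk]].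
  destruct (ex_weight_le k1 (2 * (ep * zetaR y - g0R y) / ep) ep Hk1 Hep) as [eta [He1 [He2 He3]]].
  pose proof (inE_natural_b_lt be y Hb Hnat Hy) as Hyb.
  assert (Hx0b : x0 < be) by (pose proof x0_in as [_ H]; rewrite Hb in H; exact H).
  assert (HP : Rnbhd b (fun t => Rmax x0 y < t)) by (apply Rnbhd_gt; rewrite Hb; apply Rmax_lub_lt; lra).
  destruct (liminf_eq_0_frequently_lt _ _ _ Hlim eta _ He1 HP) as [t [Pt [[Et Hyt] Hr]]].
  pose proof (Rmax_l x0 y).
  assert (Hxt : x0 < t) by lra.
  pose proof (inE_natural_b t Hnat Et Hxt) as HtI.
  rewrite zetaE_in, g0E_in in Hr; auto.
  pose proof (zeta_increasing x0 t x0_in HtI Hxt) as HZt. rewrite zeta_x0 in HZt.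
  pose proof (g0_nondecreasing x0 t x0_in HtI ltac:(lra)) as HGt. rewrite g0_x0 in HGt.
  exists y, t. do 3 (split; auto).
  apply F0_lt_of_quotient; auto.
  - intros Hc. rewrite Hc in Hr. simpl in Hr. destruct (Rlt_dec 0 (Z t)); [exact Hr|lra].
  - intros c Hc. rewrite Hc in Hr.
    destruct (zetaR_g0R_in t HtI) as [-> ->].
    destruct (inE_monotone y t Hy Et Hyt) as [Hm _]. rewrite (proj1 (zetaR_g0R_in t HtI)) in Hm.
    pose proof (Hk y t Hy Et ltac:(lra)) as Hck. rewrite Hc in Hck.
    apply (quotient_lt_of_right_ratio c (g0R y) (zetaR y) (G t) (Z t) k1 ep eta); auto.
Qed.

Lemma F0_small_of_corner u v ep : E u -> E v -> u < v -> I u -> I v ->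
  G v - G u <= ep / 2 * (Z v - Z u) ->
  Rbar_lt (Rbar_div (c1 u v) (Rbar_minus (ZE v) (ZE u))) (Fin (ep / 2)) ->
  exists w, F u v = Fin w /\ w < ep.
Proof.
  intros Eu Ev Huv HuI HvI HG Hr.
  rewrite !zetaE_in in Hr; auto.
  pose proof (zeta_increasing u v HuI HvI Huv) as HZ.
  apply F0_lt_of_quotient; auto.
  - intros Hc. rewrite Hc in Hr. simpl in Hr. destruct (Rlt_dec 0 (Z v + - Z u)); [exact Hr|lra].
  - intros c Hc. rewrite Hc in Hr. simpl in Hr.
    destruct (zetaR_g0R_in u HuI) as [-> ->]. destruct (zetaR_g0R_in v HvI) as [-> ->].
    replace (c + G v + - G u) with (c + (G v - G u)) by ring.
    replace ep with (ep / 2 + ep / 2) by field.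
    apply quotient_add_lt; [lra|exact Hr|exact HG].
Qed.

Lemma F0_small_c al : a = Fin al -> natural_a a mu sigma x0 ->
  filterlim (Rnbhd a) I (fun x => Fin (c0 x)) (Fin 0) ->
  Rbar_liminf (Rnbhd2 al al) (fun p => E (fst p) /\ E (snd p) /\ fst p < snd p)
    (fun p => Rbar_div (c1 (fst p) (snd p)) (Rbar_minus (ZE (snd p)) (ZE (fst p)))) = Fin 0 ->
  F0_arbitrarily_small.
Proof.
  intros Ha Hnat Hc0 Hlim ep Hep.
  destruct (g0_deriv_small_at_natural_a al Ha Hnat Hc0 (ep / 2) ltac:(lra)) as [w1 [Hw1 Hsmall]].
  assert (Halw : al < w1) by (destruct Hw1 as [H _]; rewrite Ha in H; exact H).
  assert (Halx0 : al < x0) by (pose proof x0_in as [H _]; rewrite Ha in H; exact H).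
  assert (Hd : 0 < Rmin (w1 - al) (x0 - al)) by (apply Rmin_pos; lra).
  pose proof (Rmin_l (w1 - al) (x0 - al)); pose proof (Rmin_r (w1 - al) (x0 - al)).
  set (d := Rmin (w1 - al) (x0 - al)) in *.
  assert (HP : Rnbhd2 al al (fun p => Rabs (fst p - al) < d /\ Rabs (snd p - al) < d)) by (exists d; auto).
  destruct (liminf_eq_0_frequently_lt _ _ _ Hlim (ep / 2) _ ltac:(lra) HP)
    as [[u v] [[Pu Pv] [[Eu [Ev Huv]] Hr]]]. simpl in *.
  assert (Hvd : v < al + d) by (unfold Rabs in Pv; destruct (Rcase_abs (v - al)); lra).
  pose proof (inE_natural_a u Hnat Eu ltac:(lra)) as HuI.
  pose proof (inE_natural_a v Hnat Ev ltac:(lra)) as HvI.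
  exists u, v. do 3 (split; auto). apply F0_small_of_corner; auto.
  apply (g0_sub_le_zeta_sub u v); auto; try lra.
  intros t Ht. apply Hsmall; [apply (inI_between a b u v); auto; lra|lra].
Qed.

Lemma F0_small_d be : b = Fin be -> natural_b b mu sigma x0 ->
  filterlim (Rnbhd b) I (fun x => Fin (c0 x)) (Fin 0) ->
  Rbar_liminf (Rnbhd2 be be) (fun p => E (fst p) /\ E (snd p) /\ fst p < snd p)
    (fun p => Rbar_div (c1 (fst p) (snd p)) (Rbar_minus (ZE (snd p)) (ZE (fst p)))) = Fin 0 ->
  F0_arbitrarily_small.
Proof.
  intros Hb Hnat Hc0 Hlim ep Hep.
  destruct (g0_deriv_small_at_natural_b be Hb Hc0 (ep / 2) ltac:(lra)) as [w1 [Hw1 Hsmall]].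
  assert (Hwb : w1 < be) by (destruct Hw1 as [_ H]; rewrite Hb in H; exact H).
  assert (Hx0b : x0 < be) by (pose proof x0_in as [_ H]; rewrite Hb in H; exact H).
  assert (Hd : 0 < Rmin (be - w1) (be - x0)) by (apply Rmin_pos; lra).
  pose proof (Rmin_l (be - w1) (be - x0)); pose proof (Rmin_r (be - w1) (be - x0)).
  set (d := Rmin (be - w1) (be - x0)) in *.
  assert (HP : Rnbhd2 be be (fun p => Rabs (fst p - be) < d /\ Rabs (snd p - be) < d)) by (exists d; auto).
  destruct (liminf_eq_0_frequently_lt _ _ _ Hlim (ep / 2) _ ltac:(lra) HP)
    as [[u v] [[Pu Pv] [[Eu [Ev Huv]] Hr]]]. simpl in *.
  assert (Hud : be - d < u) by (unfold Rabs in Pu; destruct (Rcase_abs (u - be)); lra).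
  pose proof (inE_natural_b u Hnat Eu ltac:(lra)) as HuI.
  pose proof (inE_natural_b v Hnat Ev ltac:(lra)) as HvI.
  exists u, v. do 3 (split; auto). apply F0_small_of_corner; auto.
  apply (g0_sub_le_zeta_sub u v); auto; try lra.
  intros t Ht. apply Hsmall; [apply (inI_between a b u v); auto; lra|lra].
Qed.

Lemma F0star_eq_0 : F0_arbitrarily_small -> F0star a b mu sigma x0 c0 c1 = Fin 0.
Proof.
  intros Hsmall. apply Rbar_inf_unique. split.
  - intros x [y [z [Hy [Hz [Hyz ->]]]]]. destruct (Req_dec y z) as [<-|Hne].
    + unfold F0. destruct (Rlt_dec y y); [lra|simpl; auto].
    + destruct (F0_pos y z Hy Hz ltac:(lra)) as [->|[v [-> Hv]]]; simpl; auto; lra.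
  - intros u Hu. apply Rbar_not_lt_le. intro Hlt.
    destruct (Hsmall (match u with Fin r => r | _ => 1 end)) as [y [z [Hy [Hz [Hyz [v [Hv Hvr]]]]]]];
      [destruct u; simpl in *; lra|].
    specialize (Hu (F y z) (ex_intro _ y (ex_intro _ z (conj Hy (conj Hz (conj (Rlt_le _ _ Hyz) eq_refl)))))).
    rewrite Hv in Hu. destruct u; simpl in *; lra.
Qed.

Lemma F0_no_minimizer : F0_arbitrarily_small ->
  forall y z, E y -> E z -> y < z ->
  ~ (forall y' z', E y' -> E z' -> y' <= z' -> Rbar_le (F y z) (F y' z')).
Proof.
  intros Hsmall y z Hy Hz Hyz Hmin.
  destruct (F0_pos y z Hy Hz Hyz) as [Hinf|[v0 [Hv0 Hpos]]].
  - destruct (Hsmall 1 Rlt_0_1) as [y' [z' [Hy' [Hz' [Hyz' [v [Hv _]]]]]]].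
    specialize (Hmin y' z' Hy' Hz' (Rlt_le _ _ Hyz')). rewrite Hinf, Hv in Hmin. exact Hmin.
  - destruct (Hsmall v0 Hpos) as [y' [z' [Hy' [Hz' [Hyz' [v [Hv Hvr]]]]]]].
    specialize (Hmin y' z' Hy' Hz' (Rlt_le _ _ Hyz')). rewrite Hv0, Hv in Hmin. simpl in Hmin. lra.
Qed.

End Diffusion.

Theorem proposition4p4 (a b : Rbar) (mu sigma : R -> R) (x0 : R) (a_refl : Prop)
  (c0 : R -> R) (c1 : R -> R -> Rbar) :
  Setting a b mu sigma x0 a_refl ->
  ConditionA a b mu sigma x0 a_refl ->
  ConditionB a b mu sigma x0 a_refl c0 c1 ->
  ( (* (a) *)
    (exists al : R, a = Fin al /\ natural_a a mu sigma x0 /\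
       exists z, inE a b mu sigma x0 z /\
         Rbar_liminf (Rnbhd a) (fun y => inE a b mu sigma x0 y /\ y < z)
           (fun y => Rbar_div (Rbar_minus (c1 y z) (g0E a b mu sigma x0 c0 y))
                              (zetaE a b mu sigma x0 y)) = Fin 0)
    \/ (* (b) *)
    (exists be : R, b = Fin be /\ natural_b b mu sigma x0 /\
       exists y, inE a b mu sigma x0 y /\
         Rbar_liminf (Rnbhd b) (fun z => inE a b mu sigma x0 z /\ y < z)
           (fun z => Rbar_div (Rbar_plus (c1 y z) (g0E a b mu sigma x0 c0 z))
                              (zetaE a b mu sigma x0 z)) = Fin 0)
    \/ (* (c) *)
    (exists al : R, a = Fin al /\ natural_a a mu sigma x0 /\
       filterlim (Rnbhd a) (inI a b) (fun x => Fin (c0 x)) (Fin 0) /\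
       Rbar_liminf (Rnbhd2 al al)
         (fun p => inE a b mu sigma x0 (fst p) /\ inE a b mu sigma x0 (snd p) /\ fst p < snd p)
         (fun p => Rbar_div (c1 (fst p) (snd p))
                     (Rbar_minus (zetaE a b mu sigma x0 (snd p)) (zetaE a b mu sigma x0 (fst p))))
         = Fin 0)
    \/ (* (d) *)
    (exists be : R, b = Fin be /\ natural_b b mu sigma x0 /\
       filterlim (Rnbhd b) (inI a b) (fun x => Fin (c0 x)) (Fin 0) /\
       Rbar_liminf (Rnbhd2 be be)
         (fun p => inE a b mu sigma x0 (fst p) /\ inE a b mu sigma x0 (snd p) /\ fst p < snd p)
         (fun p => Rbar_div (c1 (fst p) (snd p))
                     (Rbar_minus (zetaE a b mu sigma x0 (snd p)) (zetaE a b mu sigma x0 (fst p))))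
         = Fin 0) ) ->
  F0star a b mu sigma x0 c0 c1 = Fin 0 /\
  (forall y z, inE a b mu sigma x0 y -> inE a b mu sigma x0 z -> y < z ->
     ~ (forall y' z', inE a b mu sigma x0 y' -> inE a b mu sigma x0 z' -> y' <= z' ->
          Rbar_le (F0 a b mu sigma x0 c0 c1 y z) (F0 a b mu sigma x0 c0 c1 y' z'))).
Proof.
  intros HS HA HB Hcases.
  assert (Hsmall : F0_arbitrarily_small a b mu sigma x0 c0 c1).
  { destruct Hcases as [[al [Ha [Hn [z [Hz Hl]]]]]|[[be [Hb [Hn [y [Hy Hl]]]]]|
                       [[al [Ha [Hn [Hc Hl]]]]|[be [Hb [Hn [Hc Hl]]]]]]].
    - exact (F0_small_a a b mu sigma x0 a_refl c0 c1 HS HA HB al z Ha Hn Hz Hl).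
    - exact (F0_small_b a b mu sigma x0 a_refl c0 c1 HS HA HB be y Hb Hn Hy Hl).
    - exact (F0_small_c a b mu sigma x0 a_refl c0 c1 HS HA HB al Ha Hn Hc Hl).
    - exact (F0_small_d a b mu sigma x0 a_refl c0 c1 HS HA HB be Hb Hn Hc Hl). }
  split.
  - exact (F0star_eq_0 a b mu sigma x0 a_refl c0 c1 HS HA HB Hsmall).
  - exact (F0_no_minimizer a b mu sigma x0 a_refl c0 c1 HS HA HB Hsmall).
Qed.
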